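(* Let $X$ be an infinite-dimensional complex separable Hilbert space and $A\in\mathcal B(X)$ with an unconditional basis of eigenvectors $\{\varphi_n\}_{n\ge1}$, $A\varphi_n=-\lambda_n\varphi_n$. Let $b\in X$ and $B:X\to\mathbb C$, $Bx=\langle x,b\rangle$. Then $(A,B)$ is exactly observable on $[0,\infty)$ (equivalently, $\{e^{tA^*}b\}_{t\in[0,\infty)}$ is a semi-continuous frame for $X$) if and only if all of the following hold: (1) $\mathrm{Re}(\lambda_n)>0$ for all $n$; (2) $\mathrm{Re}(\lambda_n)\to0$ as $n\to\infty$; (3) the functions $\mathcal E_n(t)=e^{-\lambda_nt}\langle\varphi_n,b\rangle$, $n\ge1$, form an unconditional sequence in $L^2([0,\infty),\mathbb C)$; (4) there are constants $0<c_1\le c_2<\infty$ with $c_1\le \dfrac{|\langle b,\varphi_n\rangle|}{\|\varphi_n\|\sqrt{2\mathrm{Re}(\lambda_n)}}\le c_2$ for all $n$.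
   Context: $e^{tA}=\sum_n(tA)^n/n!$. $(A,B)$ is exactly observable on $[0,\infty)$ if there are $c_1,c_2>0$ with $c_1\|x\|^2\le\int_0^\infty|\langle e^{tA}x,b\rangle|^2dt\le c_2\|x\|^2$ for all $x\in X$. A sequence $\{\psi_n\}$ is an unconditional sequence if there are $c_1,c_2>0$ with $c_1\sum|a_n|^2\|\psi_n\|^2\le\|\sum a_n\psi_n\|^2\le c_2\sum|a_n|^2\|\psi_n\|^2$ for all finitely supported scalar sequences; an unconditional basis is a complete unconditional sequence. *)

From Stdlib Require Import Reals Lra ClassicalEpsilon Factorial.
Open Scope R_scope.

Definition CC : Type := (R * R)%type.
Definition CRe (z : CC) : R := fst z.
Definition CIm (z : CC) : R := snd z.
Definition RtoC (r : R) : CC := (r, 0).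
Definition C0 : CC := (0, 0).
Definition C1 : CC := (1, 0).
Definition Cadd (z w : CC) : CC := (fst z + fst w, snd z + snd w).
Definition Copp (z : CC) : CC := (- fst z, - snd z).
Definition Cmul (z w : CC) : CC :=
  (fst z * fst w - snd z * snd w, fst z * snd w + snd z * fst w).
Definition Cconj (z : CC) : CC := (fst z, - snd z).
Definition Cabs (z : CC) : R := sqrt (fst z ^ 2 + snd z ^ 2).
Definition Cexp (z : CC) : CC := (exp (fst z) * cos (snd z), exp (fst z) * sin (snd z)).

Fixpoint Csum (N : nat) (f : nat -> CC) : CC :=
  match N with O => C0 | S k => Cadd (Csum k f) (f k) end.
Fixpoint Rsum (N : nat) (f : nat -> R) : R :=
  match N with O => 0 | S k => Rsum k f + f k end.

Record HilbertSpace := {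
  Hcar :> Type;
  Hzero : Hcar;
  Hadd : Hcar -> Hcar -> Hcar;
  Hopp : Hcar -> Hcar;
  Hscal : CC -> Hcar -> Hcar;
  Hinner : Hcar -> Hcar -> CC;   (* linear in the first argument *)
  Hadd_assoc : forall x y z, Hadd x (Hadd y z) = Hadd (Hadd x y) z;
  Hadd_comm : forall x y, Hadd x y = Hadd y x;
  Hadd_zero : forall x, Hadd Hzero x = x;
  Hadd_opp : forall x, Hadd x (Hopp x) = Hzero;
  Hscal_one : forall x, Hscal C1 x = x;
  Hscal_assoc : forall a c x, Hscal a (Hscal c x) = Hscal (Cmul a c) x;
  Hscal_addr : forall a x y, Hscal a (Hadd x y) = Hadd (Hscal a x) (Hscal a y);
  Hscal_addl : forall a c x, Hscal (Cadd a c) x = Hadd (Hscal a x) (Hscal c x);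
  Hinner_addl : forall x y z, Hinner (Hadd x y) z = Cadd (Hinner x z) (Hinner y z);
  Hinner_scall : forall a x y, Hinner (Hscal a x) y = Cmul a (Hinner x y);
  Hinner_conj : forall x y, Hinner y x = Cconj (Hinner x y);
  Hinner_pos : forall x, 0 <= CRe (Hinner x x);
  Hinner_def : forall x, CRe (Hinner x x) = 0 -> x = Hzero;
  Hcomplete : forall u : nat -> Hcar,
    (forall eps, eps > 0 -> exists N, forall m n, (m >= N)%nat -> (n >= N)%nat ->
        sqrt (CRe (Hinner (Hadd (u m) (Hopp (u n))) (Hadd (u m) (Hopp (u n))))) < eps) ->
    exists l, forall eps, eps > 0 -> exists N, forall n, (n >= N)%nat ->
        sqrt (CRe (Hinner (Hadd (u n) (Hopp l)) (Hadd (u n) (Hopp l)))) < eps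
}.

Arguments Hzero {h}.
Arguments Hadd {h}.
Arguments Hopp {h}.
Arguments Hscal {h}.
Arguments Hinner {h}.

Section HilbertDefs.
Variable H : HilbertSpace.

Definition Hnorm (x : H) : R := sqrt (CRe (Hinner x x)).
Definition Hsub (x y : H) : H := Hadd x (Hopp y).

Fixpoint Hsum (N : nat) (f : nat -> H) : H :=
  match N with O => Hzero | S k => Hadd (Hsum k f) (f k) end.

Definition Hconv (u : nat -> H) (l : H) : Prop :=
  forall eps, eps > 0 -> exists N, forall n, (n >= N)%nat -> Hnorm (Hsub (u n) l) < eps.

(* the limit of a sequence (chosen by classical description; Hzero if none) *)
Definition Hlim (u : nat -> H) : H := epsilon (inhabits Hzero) (fun l => Hconv u l).

Definition separable : Prop :=
  exists d : nat -> H, forall x eps, eps > 0 -> exists n, Hnorm (Hsub x (d n)) < eps.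

Definition infinite_dimensional : Prop :=
  forall N : nat, exists v : nat -> H,
    forall a : nat -> CC, Hsum N (fun n => Hscal (a n) (v n)) = Hzero ->
      forall n, (n < N)%nat -> a n = C0.

Definition bounded_operator (A : H -> H) : Prop :=
  (forall x y, A (Hadd x y) = Hadd (A x) (A y)) /\
  (forall a x, A (Hscal a x) = Hscal a (A x)) /\
  (exists M, forall x, Hnorm (A x) <= M * Hnorm x).

Definition expA (A : H -> H) (t : R) (x : H) : H :=
  Hlim (fun K => Hsum K (fun n => Hscal (RtoC (t ^ n / INR (fact n))) (Nat.iter n A x))).

Definition unconditional_sequence (psi : nat -> H) : Prop :=
  exists c1 c2, c1 > 0 /\ c2 > 0 /\
    forall (N : nat) (a : nat -> CC),
      c1 * Rsum N (fun n => Cabs (a n) ^ 2 * Hnorm (psi n) ^ 2)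
        <= Hnorm (Hsum N (fun n => Hscal (a n) (psi n))) ^ 2 /\
      Hnorm (Hsum N (fun n => Hscal (a n) (psi n))) ^ 2
        <= c2 * Rsum N (fun n => Cabs (a n) ^ 2 * Hnorm (psi n) ^ 2).

Definition complete_sequence (psi : nat -> H) : Prop :=
  forall x eps, eps > 0 -> exists N (a : nat -> CC),
    Hnorm (Hsub x (Hsum N (fun n => Hscal (a n) (psi n)))) < eps.

Definition unconditional_basis (psi : nat -> H) : Prop :=
  unconditional_sequence psi /\ complete_sequence psi.

End HilbertDefs.

(* improper Riemann integral of f over [0,oo) converges to L
   (used only for continuous nonnegative integrands, where it agrees with the
   Lebesgue integral) *)
Definition conv0inf (f : R -> R) (L : R) : Prop :=
  (forall T, 0 <= T -> inhabited (Riemann_integrable f 0 T)) /\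
  (forall eps, eps > 0 -> exists M, forall T (pr : Riemann_integrable f 0 T),
      0 <= T -> M <= T -> Rabs (RiemannInt pr - L) < eps).

Definition int0inf (f : R -> R) : R := epsilon (inhabits 0) (fun L => conv0inf f L).

Definition in_L2 (g : R -> CC) : Prop := exists L, conv0inf (fun t => Cabs (g t) ^ 2) L.
Definition L2norm2 (g : R -> CC) : R := int0inf (fun t => Cabs (g t) ^ 2).

Definition unconditional_sequence_L2 (E : nat -> R -> CC) : Prop :=
  (forall n, in_L2 (E n)) /\
  exists c1 c2, c1 > 0 /\ c2 > 0 /\
    forall (N : nat) (a : nat -> CC),
      exists L, conv0inf (fun t => Cabs (Csum N (fun n => Cmul (a n) (E n t))) ^ 2) L /\
        c1 * Rsum N (fun n => Cabs (a n) ^ 2 * L2norm2 (E n)) <= L /\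
        L <= c2 * Rsum N (fun n => Cabs (a n) ^ 2 * L2norm2 (E n)).

Definition exactly_observable (H : HilbertSpace) (A : H -> H) (b : H) : Prop :=
  exists c1 c2, c1 > 0 /\ c2 > 0 /\
    forall x : H, exists L,
      conv0inf (fun t => Cabs (Hinner (expA H A t x) b) ^ 2) L /\
      c1 * Hnorm H x ^ 2 <= L /\ L <= c2 * Hnorm H x ^ 2.

(** Write g_x(t) = <e^(tA) x, b>.  Since A phi_n = - lambda_n phi_n, the series defining e^(tA)
    gives e^(tA) phi_n = e^(- lambda_n t) phi_n, so for a finite combination x = sum a_n phi_n we get
    g_x = sum a_n E_n.  For such x the observability inequality therefore compares the L^2 norm of
    sum a_n E_n with |x|^2, which the Riesz bounds of the basis compare with sum |a_n|^2 |phi_n|^2;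
    condition (4) says exactly that |E_n|_(L^2)^2 = |<phi_n, b>|^2 / (2 Re lambda_n) is comparable
    to |phi_n|^2.  Testing observability on x = phi_n forces Re lambda_n > 0 (otherwise |E_n|^2 is
    not integrable) and (4); testing it on finite sums gives (3); and Bessel's inequality makes
    sum |<phi_n, b>|^2 / |phi_n|^2 finite, which together with (4) forces Re lambda_n -> 0.
    Conversely, (1), (3), (4) give both observability bounds on finite combinations, and they
    extend to all x by density, because e^(tA) is uniformly bounded for t in [0, T]. *)

From Coquelicot Require Import Coquelicot.
From Stdlib Require Import Reals Lra Psatz ClassicalEpsilon FunctionalExtensionality Factorial.
Open Scope R_scope.

(** * Complex numbers and real analysis *)

Ltac cring :=
  repeat match goal with z : CC |- _ => destruct z end;
  unfold Cadd, Cmul, Copp, Cconj, RtoC, C0, C1 in *; simpl; f_equal; ring.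

Lemma Cabs_sq z : Cabs z ^ 2 = fst z ^ 2 + snd z ^ 2.
Proof. unfold Cabs. rewrite pow2_sqrt; nra. Qed.

Lemma Cabs_ge0 z : 0 <= Cabs z.
Proof. apply sqrt_pos. Qed.

Lemma Cabs_mul z w : Cabs (Cmul z w) = Cabs z * Cabs w.
Proof. unfold Cabs. rewrite <- sqrt_mult by nra. f_equal. destruct z, w; simpl; ring. Qed.

Lemma Cabs_conj z : Cabs (Cconj z) = Cabs z.
Proof. unfold Cabs; destruct z; simpl; f_equal; ring. Qed.

Lemma Cabs_opp z : Cabs (Copp z) = Cabs z.
Proof. unfold Cabs; destruct z; simpl; f_equal; ring. Qed.

Lemma Cabs_RtoC r : Cabs (RtoC r) = Rabs r.
Proof. unfold Cabs, RtoC; simpl. rewrite <- sqrt_Rsqr_abs. f_equal. unfold Rsqr; ring. Qed.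

Lemma Cabs_C0 : Cabs C0 = 0.
Proof. unfold Cabs, C0; cbn [fst snd]. replace (0 ^ 2 + 0 ^ 2) with 0 by ring. apply sqrt_0. Qed.

Lemma Cabs_C1 : Cabs C1 = 1.
Proof. unfold Cabs, C1; cbn [fst snd]. replace (1 ^ 2 + 0 ^ 2) with 1 by ring. apply sqrt_1. Qed.

Lemma Rabs_fst_le_Cabs z : Rabs (fst z) <= Cabs z.
Proof. unfold Cabs. rewrite <- sqrt_Rsqr_abs. apply sqrt_le_1_alt. unfold Rsqr. nra. Qed.

Lemma Rabs_snd_le_Cabs z : Rabs (snd z) <= Cabs z.
Proof. unfold Cabs. rewrite <- sqrt_Rsqr_abs. apply sqrt_le_1_alt. unfold Rsqr. nra. Qed.

Lemma Cabs_le_Rabs_fst_snd z : Cabs z <= Rabs (fst z) + Rabs (snd z).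
Proof.
  pose proof (Rabs_pos (fst z)); pose proof (Rabs_pos (snd z)).
  unfold Cabs. rewrite <- (sqrt_pow2 (Rabs (fst z) + Rabs (snd z))) by lra.
  apply sqrt_le_1_alt. rewrite <- (pow2_abs (fst z)), <- (pow2_abs (snd z)). nra.
Qed.

Lemma Cabs_sq_le_sub u v : Cabs u ^ 2 <= 2 * Cabs v ^ 2 + 2 * Cabs (Cadd u (Copp v)) ^ 2.
Proof.
  rewrite !Cabs_sq. destruct u as [u1 u2], v as [v1 v2]; simpl.
  pose proof (pow2_ge_0 (u1 - 2 * v1)); pose proof (pow2_ge_0 (u2 - 2 * v2)). nra.
Qed.

Lemma Cabs_Cexp z : Cabs (Cexp z) = exp (fst z).
Proof.
  unfold Cabs, Cexp; cbn [fst snd].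
  replace ((exp (fst z) * cos (snd z)) ^ 2 + (exp (fst z) * sin (snd z)) ^ 2)
    with (exp (fst z) ^ 2) by (pose proof (sin2_cos2 (snd z)); unfold Rsqr in *; nra).
  apply sqrt_pow2. left; apply exp_pos.
Qed.

Fixpoint Cpow (w : CC) (k : nat) : CC :=
  match k with O => C1 | S k => Cmul w (Cpow w k) end.

Lemma Cabs_Cpow w k : Cabs (Cpow w k) = Cabs w ^ k.
Proof. induction k; simpl; [apply Cabs_C1 | rewrite Cabs_mul, IHk; reflexivity]. Qed.

Lemma Csum_ext N f g : (forall n, (n < N)%nat -> f n = g n) -> Csum N f = Csum N g.
Proof.
  induction N; intro e; simpl; [reflexivity|].
  rewrite IHN by (intros; apply e; lia). rewrite e by lia. reflexivity.
Qed.

Lemma Csum_RtoC N s : Csum N (fun n => RtoC (s n)) = RtoC (Rsum N s).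
Proof.
  induction N; simpl; [reflexivity|]. rewrite IHN. unfold Cadd, RtoC; simpl. f_equal; ring.
Qed.

Lemma Rsum_ext N f g : (forall n, (n < N)%nat -> f n = g n) -> Rsum N f = Rsum N g.
Proof.
  induction N; intro e; simpl; [reflexivity|].
  rewrite IHN by (intros; apply e; lia). rewrite e by lia. reflexivity.
Qed.

Lemma Rsum_le N f g : (forall n, f n <= g n) -> Rsum N f <= Rsum N g.
Proof. intro h. induction N; simpl; [lra | specialize (h N); lra]. Qed.

Lemma Rsum_ge0 N f : (forall n, 0 <= f n) -> 0 <= Rsum N f.
Proof. intro p. induction N; simpl; [lra | specialize (p N); lra]. Qed.

Lemma Rsum_scal N c f : Rsum N (fun n => c * f n) = c * Rsum N f.
Proof. induction N; simpl; [ring | rewrite IHN; ring]. Qed.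

Lemma Rsum_sq_weights_between (a : nat -> CC) (w v : nat -> R) c1 c2 N :
  (forall n, c1 * v n <= w n <= c2 * v n) ->
  c1 * Rsum N (fun n => Cabs (a n) ^ 2 * v n) <= Rsum N (fun n => Cabs (a n) ^ 2 * w n)
  <= c2 * Rsum N (fun n => Cabs (a n) ^ 2 * v n).
Proof.
  intro h. rewrite <- !Rsum_scal.
  split; apply Rsum_le; intro n; specialize (h n); pose proof (pow2_ge_0 (Cabs (a n))); nra.
Qed.

Lemma Rsum_diff_le f g m n : (n <= m)%nat -> (forall k, f k <= g k) ->
  Rsum m f - Rsum n f <= Rsum m g - Rsum n g.
Proof. intros le fg. induction le; [lra|]. simpl. specialize (fg m). lra. Qed.

Lemma Rsum_sum_f_R0 N f : Rsum (S N) f = sum_f_R0 f N.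
Proof. induction N; simpl in *; [ring | rewrite <- IHN; reflexivity]. Qed.

Lemma exp_series y : Un_cv (fun K => Rsum K (fun k => y ^ k / INR (fact k))) (exp y).
Proof.
  intros eps ep. unfold exp. destruct (exist_exp y) as [l hl]; simpl.
  destruct (hl eps ep) as [N hN]. exists (S N). intros [|n] hn; [lia|].
  rewrite Rsum_sum_f_R0.
  replace (sum_f_R0 (fun k => y ^ k / INR (fact k)) n)
    with (sum_f_R0 (fun i => / INR (fact i) * y ^ i) n)
    by (apply sum_eq; intros; unfold Rdiv; ring).
  apply hN. lia.
Qed.

Lemma exp_series_le y K : 0 <= y -> Rsum K (fun k => y ^ k / INR (fact k)) <= exp y.
Proof.
  intro p. apply (growing_ineq (fun K => Rsum K (fun k => y ^ k / INR (fact k)))).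
  - intro n; simpl. assert (0 <= y ^ n / INR (fact n)).
    { apply Rdiv_le_0_compat; [apply pow_le; auto | apply lt_0_INR, lt_O_fact]. }
    lra.
  - apply exp_series.
Qed.

Lemma terms_cv0_of_bounded_sums (s : nat -> R) B :
  (forall n, 0 <= s n) -> (forall N, Rsum N s <= B) -> Un_cv s 0.
Proof.
  intros s0 bnd.
  assert (gr : Un_growing (fun N => Rsum N s)) by (intro n; simpl; specialize (s0 n); lra).
  assert (ub : has_ub (fun N => Rsum N s)) by (exists B; intros y [N ->]; apply bnd).
  destruct (growing_cv _ gr ub) as [l hl].
  intros eps ep. destruct (CV_Cauchy _ (exist _ l hl) eps ep) as [N hN].
  exists N. intros n hn. specialize (hN (S n) n ltac:(lia) hn).
  unfold R_dist in *. simpl in hN. rewrite Rminus_0_r.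
  replace (Rsum n s + s n - Rsum n s) with (s n) in hN by ring. exact hN.
Qed.

Lemma exp_le_compat x y : x <= y -> exp x <= exp y.
Proof. intros [lt | ->]; [left; apply exp_increasing; exact lt | right; reflexivity]. Qed.

Lemma le_of_approx a b D : 0 <= D -> (forall d, 0 < d <= 1 -> a <= b + d * D) -> a <= b.
Proof.
  intros D0 h. apply Rle_plus_epsilon. intros eps ep.
  set (d := Rmin 1 (eps / (D + 1))).
  assert (dp : 0 < d) by (apply Rmin_glb_lt; [lra | apply Rdiv_lt_0_compat; lra]).
  assert (dD : d * D <= eps).
  { apply Rle_trans with (eps / (D + 1) * (D + 1)); [|right; field; lra].
    apply Rmult_le_compat; try lra. apply Rmin_r. }
  specialize (h d (conj dp (Rmin_l _ _))). lra.
Qed.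

Lemma continuity_pt_uniform_approx (f : R -> R) t :
  (forall eps, eps > 0 -> exists g, continuity_pt g t /\
     forall u, Rabs (u - t) < 1 -> Rabs (f u - g u) < eps) ->
  continuity_pt f t.
Proof.
  intros approx eps ep.
  destruct (approx (eps / 3) ltac:(lra)) as [g [cg close]].
  destruct (cg (eps / 3) ltac:(lra)) as [del [dp hd]].
  exists (Rmin del 1). split; [apply Rmin_glb_lt; lra|].
  intros u [hD hu]. simpl in *. unfold R_dist in *.
  specialize (hd u (conj hD (Rlt_le_trans _ _ _ hu (Rmin_l _ _)))). simpl in hd. unfold R_dist in hd.
  pose proof (close u (Rlt_le_trans _ _ _ hu (Rmin_r _ _))).
  pose proof (close t ltac:(rewrite Rminus_diag, Rabs_R0; lra)).
  replace (f u - f t) with ((f u - g u) + (g u - g t) + - (f t - g t)) by ring.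
  pose proof (Rabs_triang ((f u - g u) + (g u - g t)) (- (f t - g t))).
  pose proof (Rabs_triang (f u - g u) (g u - g t)). rewrite Rabs_Ropp in *. lra.
Qed.

(** * Hilbert spaces *)

Section HilbertSpaceTheory.
Variable H : HilbertSpace.
Implicit Types x y z : H.

Lemma Hadd_zero_r x : Hadd x Hzero = x.
Proof. rewrite Hadd_comm; apply Hadd_zero. Qed.

Lemma Hadd_cancel x y z : Hadd x y = Hadd x z -> y = z.
Proof.
  intro e. rewrite <- (Hadd_zero H y), <- (Hadd_zero H z), <- (Hadd_opp H x), (Hadd_comm H x).
  rewrite <- !Hadd_assoc, e. reflexivity.
Qed.

Lemma Hadd_addACA (a b c d : H) : Hadd (Hadd a b) (Hadd c d) = Hadd (Hadd a c) (Hadd b d).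
Proof. rewrite <- !Hadd_assoc. f_equal. rewrite !Hadd_assoc. f_equal. apply Hadd_comm. Qed.

Lemma Hscal_C0 x : Hscal C0 x = Hzero.
Proof.
  apply (Hadd_cancel (Hscal C0 x)). rewrite Hadd_zero_r, <- Hscal_addl.
  f_equal. cring.
Qed.

Lemma Hopp_scal x : Hopp x = Hscal (Copp C1) x.
Proof.
  apply (Hadd_cancel x). rewrite Hadd_opp, <- (Hscal_one H x) at 1.
  rewrite <- Hscal_addl, <- (Hscal_C0 x). f_equal. cring.
Qed.

Lemma Hscal_zero a : Hscal a (@Hzero H) = Hzero.
Proof.
  rewrite <- (Hscal_C0 Hzero) at 1. rewrite Hscal_assoc. replace (Cmul a C0) with C0 by cring. apply Hscal_C0.
Qed.

Lemma Hopp_add x y : Hopp (Hadd x y) = Hadd (Hopp x) (Hopp y).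
Proof. rewrite !Hopp_scal. apply Hscal_addr. Qed.

Lemma Hinner_zero_l y : Hinner (@Hzero H) y = C0.
Proof. rewrite <- (Hscal_C0 Hzero), Hinner_scall. cring. Qed.

Lemma Hinner_zero_r y : Hinner y (@Hzero H) = C0.
Proof. rewrite Hinner_conj, Hinner_zero_l. cring. Qed.

Lemma Hinner_addr x y z : Hinner x (Hadd y z) = Cadd (Hinner x y) (Hinner x z).
Proof. rewrite Hinner_conj, Hinner_addl, (Hinner_conj H x y), (Hinner_conj H x z). cring. Qed.

Lemma Hinner_scalr a x y : Hinner x (Hscal a y) = Cmul (Cconj a) (Hinner x y).
Proof. rewrite Hinner_conj, Hinner_scall, (Hinner_conj H x y). cring. Qed.

Lemma Hinner_self x : Hinner x x = RtoC (CRe (Hinner x x)).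
Proof.
  pose proof (Hinner_conj H x x) as e. destruct (Hinner x x) as [p q].
  unfold Cconj, RtoC, CRe in *; simpl in *. injection e. intro. f_equal. lra.
Qed.

Lemma Hnorm_ge0 x : 0 <= Hnorm H x.
Proof. apply sqrt_pos. Qed.

Lemma Hnorm_sq x : Hnorm H x ^ 2 = CRe (Hinner x x).
Proof. unfold Hnorm. rewrite pow2_sqrt; auto. apply Hinner_pos. Qed.

Lemma Hnorm_zero_inv x : Hnorm H x = 0 -> x = Hzero.
Proof. intro e. apply Hinner_def. rewrite <- Hnorm_sq, e. ring. Qed.

Lemma Hnorm_zero : Hnorm H Hzero = 0.
Proof. unfold Hnorm. rewrite Hinner_zero_l. apply sqrt_0. Qed.

Lemma Hnorm_scal a x : Hnorm H (Hscal a x) = Cabs a * Hnorm H x.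
Proof.
  apply Rsqr_inj; [apply Hnorm_ge0 | apply Rmult_le_pos; [apply Cabs_ge0 | apply Hnorm_ge0] |].
  rewrite !Rsqr_pow2, Rpow_mult_distr, !Hnorm_sq, Cabs_sq, Hinner_scall, Hinner_scalr, Hinner_self.
  destruct a; unfold Cmul, Cconj, RtoC, CRe; simpl. ring.
Qed.

Lemma Hnorm_sq_add x y :
  Hnorm H (Hadd x y) ^ 2 = Hnorm H x ^ 2 + 2 * CRe (Hinner x y) + Hnorm H y ^ 2.
Proof.
  rewrite !Hnorm_sq, !Hinner_addl, !Hinner_addr, (Hinner_conj H x y).
  destruct (Hinner x x), (Hinner y y), (Hinner y x); unfold CRe, Cadd, Cconj; simpl. ring.
Qed.

Lemma Cauchy_Schwarz x y : Cabs (Hinner x y) <= Hnorm H x * Hnorm H y.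
Proof.
  destruct (Req_dec (Hnorm H y) 0) as [y0 | ny].
  { apply Hnorm_zero_inv in y0; subst y.
    rewrite Hinner_zero_r, Cabs_C0, Hnorm_zero. lra. }
  pose proof (Hnorm_ge0 x); pose proof (Hnorm_ge0 y).
  assert (d : 0 < Hnorm H y ^ 2) by (apply pow_lt; lra).
  set (mu := Hinner x y).
  (* minimise the norm of x + c y, c = - mu / |y|^2 *)
  set (c := (- fst mu / Hnorm H y ^ 2, - snd mu / Hnorm H y ^ 2) : CC).
  assert (ineq : 0 <= Hnorm H x ^ 2 * Hnorm H y ^ 2 - Cabs mu ^ 2).
  { pose proof (pow2_ge_0 (Hnorm H (Hadd x (Hscal c y)))) as P.
    rewrite Hnorm_sq_add, Hnorm_scal, Hinner_scalr, Rpow_mult_distr in P. fold mu in P.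
    assert (E : 2 * CRe (Cmul (Cconj c) mu) + Cabs c ^ 2 * Hnorm H y ^ 2
                = - (Cabs mu ^ 2 / Hnorm H y ^ 2)).
    { rewrite !Cabs_sq. unfold c, Cmul, Cconj, CRe; simpl. field. lra. }
    assert (Q : Cabs mu ^ 2 / Hnorm H y ^ 2 <= Hnorm H x ^ 2) by lra.
    apply (Rmult_le_compat_r (Hnorm H y ^ 2)) in Q; [|lra].
    unfold Rdiv in Q. rewrite Rmult_assoc, Rinv_l in Q; lra. }
  apply Rsqr_incr_0_var; [rewrite !Rsqr_pow2, Rpow_mult_distr; lra | nra].
Qed.

Lemma Hnorm_triangle x y : Hnorm H (Hadd x y) <= Hnorm H x + Hnorm H y.
Proof.
  pose proof (Hnorm_ge0 x); pose proof (Hnorm_ge0 y).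
  apply Rsqr_incr_0_var; [|lra]. rewrite !Rsqr_pow2, Hnorm_sq_add.
  pose proof (Cauchy_Schwarz x y); pose proof (Rabs_fst_le_Cabs (Hinner x y)).
  pose proof (Rle_abs (fst (Hinner x y))). unfold CRe. nra.
Qed.

Lemma Hsub_add x y (l m : H) : Hsub H (Hadd x y) (Hadd l m) = Hadd (Hsub H x l) (Hsub H y m).
Proof. unfold Hsub. rewrite Hopp_add. apply Hadd_addACA. Qed.

Lemma Hsub_scal (a : CC) x y : Hsub H (Hscal a x) (Hscal a y) = Hscal a (Hsub H x y).
Proof. unfold Hsub. rewrite Hscal_addr, !Hopp_scal, !Hscal_assoc. do 2 f_equal. cring. Qed.

Lemma Hsub_scal_vec (a c : CC) x : Hsub H (Hscal a x) (Hscal c x) = Hscal (Cadd a (Copp c)) x.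
Proof. unfold Hsub. rewrite Hopp_scal, Hscal_assoc, Hscal_addl. do 2 f_equal. cring. Qed.

Lemma Hsub_diag x : Hsub H x x = Hzero.
Proof. apply Hadd_opp. Qed.

Lemma Hsub_zero x : Hsub H x Hzero = x.
Proof. unfold Hsub. rewrite Hopp_scal, Hscal_zero. apply Hadd_zero_r. Qed.

Lemma Hsub_chain x y z : Hsub H x z = Hadd (Hsub H x y) (Hsub H y z).
Proof.
  unfold Hsub. rewrite <- Hadd_assoc. f_equal.
  rewrite Hadd_assoc, (Hadd_comm H (Hopp y) y), Hadd_opp, Hadd_zero. reflexivity.
Qed.

Lemma Hnorm_sub_sym x y : Hnorm H (Hsub H x y) = Hnorm H (Hsub H y x).
Proof.
  replace (Hsub H y x) with (Hscal (Copp C1) (Hsub H x y)).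
  - rewrite Hnorm_scal, Cabs_opp, Cabs_C1. ring.
  - unfold Hsub. rewrite !Hopp_scal, Hscal_addr, Hscal_assoc.
    replace (Cmul (Copp C1) (Copp C1)) with C1 by cring. rewrite Hscal_one. apply Hadd_comm.
Qed.

Lemma Hnorm_sub_triangle x y z : Hnorm H (Hsub H x z) <= Hnorm H (Hsub H x y) + Hnorm H (Hsub H y z).
Proof. rewrite (Hsub_chain x y z). apply Hnorm_triangle. Qed.

Lemma Hnorm_rev_triangle x y : Hnorm H x - Hnorm H y <= Hnorm H (Hsub H x y).
Proof. pose proof (Hnorm_sub_triangle x y Hzero) as tri. rewrite !Hsub_zero in tri. lra. Qed.

Lemma Hnorm_sq_close x y d : Hnorm H (Hsub H x y) <= d -> d <= 1 ->
  Rabs (Hnorm H y ^ 2 - Hnorm H x ^ 2) <= d * (2 * Hnorm H x + 1).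
Proof.
  intros hxy d1. pose proof (Hnorm_ge0 x); pose proof (Hnorm_ge0 y).
  pose proof (Hnorm_rev_triangle x y); pose proof (Hnorm_rev_triangle y x) as tri.
  rewrite Hnorm_sub_sym in tri.
  replace (Hnorm H y ^ 2 - Hnorm H x ^ 2)
    with ((Hnorm H y - Hnorm H x) * (Hnorm H y + Hnorm H x)) by ring.
  rewrite Rabs_mult, (Rabs_pos_eq (_ + _)) by lra.
  apply Rmult_le_compat; try apply Rabs_pos; try lra.
  apply Rabs_le. lra.
Qed.

Lemma Hinner_sub_l x y (b : H) : Hinner (Hsub H x y) b = Cadd (Hinner x b) (Copp (Hinner y b)).
Proof. unfold Hsub. rewrite Hinner_addl, Hopp_scal, Hinner_scall. f_equal. cring. Qed.

Lemma Hconv_unique (u : nat -> H) l m : Hconv H u l -> Hconv H u m -> l = m.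
Proof.
  intros cl cm. apply (Hadd_cancel (Hopp m)).
  rewrite (Hadd_comm H (Hopp m) m), Hadd_opp, Hadd_comm. fold (Hsub H l m).
  apply Hnorm_zero_inv, Rle_antisym; [|apply Hnorm_ge0]. apply Rnot_lt_le; intro pos.
  set (e := Hnorm H (Hsub H l m) / 2).
  destruct (cl e ltac:(unfold e; lra)) as [N1 h1], (cm e ltac:(unfold e; lra)) as [N2 h2].
  specialize (h1 (N1 + N2)%nat ltac:(lia)); specialize (h2 (N1 + N2)%nat ltac:(lia)).
  pose proof (Hnorm_sub_triangle l (u (N1 + N2)%nat) m) as tri.
  rewrite (Hnorm_sub_sym l (u _)) in tri. unfold e in *. lra.
Qed.

Lemma Hlim_spec (u : nat -> H) l : Hconv H u l -> Hlim H u = l.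
Proof.
  intro c. apply (Hconv_unique u); [|exact c]. unfold Hlim. apply epsilon_spec. exists l; exact c.
Qed.

Lemma Hconv_add (u v : nat -> H) l m :
  Hconv H u l -> Hconv H v m -> Hconv H (fun n => Hadd (u n) (v n)) (Hadd l m).
Proof.
  intros cu cv eps ep.
  destruct (cu (eps / 2) ltac:(lra)) as [N1 h1], (cv (eps / 2) ltac:(lra)) as [N2 h2].
  exists (N1 + N2)%nat. intros n hn. rewrite Hsub_add.
  eapply Rle_lt_trans; [apply Hnorm_triangle|].
  specialize (h1 n ltac:(lia)); specialize (h2 n ltac:(lia)). lra.
Qed.

Lemma Hconv_scal (a : CC) (u : nat -> H) l :
  Hconv H u l -> Hconv H (fun n => Hscal a (u n)) (Hscal a l).
Proof.
  intros cu eps ep. pose proof (Cabs_ge0 a).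
  destruct (cu (eps / (Cabs a + 1))) as [N h]; [apply Rdiv_lt_0_compat; lra|].
  exists N. intros n hn. rewrite Hsub_scal, Hnorm_scal. specialize (h n hn).
  pose proof (Hnorm_ge0 (Hsub H (u n) l)).
  apply (Rmult_lt_compat_l (Cabs a + 1)) in h; [|lra]. field_simplify in h; [|lra]. nra.
Qed.

Lemma Hconv_norm_le (u : nat -> H) l B :
  (forall n, Hnorm H (u n) <= B) -> Hconv H u l -> Hnorm H l <= B.
Proof.
  intros hb cu. apply Rnot_lt_le; intro lt.
  destruct (cu (Hnorm H l - B) ltac:(lra)) as [N h]. specialize (h N (le_n _)).
  pose proof (hb N). pose proof (Hnorm_rev_triangle l (u N)) as tri.
  rewrite Hnorm_sub_sym in tri. lra.
Qed.

Lemma Hsum_ext N (f g : nat -> H) : (forall n, (n < N)%nat -> f n = g n) -> Hsum H N f = Hsum H N g.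
Proof.
  induction N; intro e; simpl; [reflexivity|].
  rewrite IHN by (intros; apply e; lia). rewrite e by lia. reflexivity.
Qed.

Lemma Hsum_add N (f g : nat -> H) :
  Hsum H N (fun n => Hadd (f n) (g n)) = Hadd (Hsum H N f) (Hsum H N g).
Proof. induction N; simpl; [symmetry; apply Hadd_zero | rewrite IHN; apply Hadd_addACA]. Qed.

Lemma Hsum_scal (a : CC) N (f : nat -> H) : Hscal a (Hsum H N f) = Hsum H N (fun n => Hscal a (f n)).
Proof. induction N; simpl; [apply Hscal_zero | rewrite Hscal_addr, IHN; reflexivity]. Qed.

Lemma Hsum_scal_vec N (c : nat -> CC) x : Hsum H N (fun n => Hscal (c n) x) = Hscal (Csum N c) x.
Proof. induction N; simpl; [symmetry; apply Hscal_C0 | rewrite IHN, Hscal_addl; reflexivity]. Qed.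

Lemma Hinner_Hsum N (f : nat -> H) (b : H) : Hinner (Hsum H N f) b = Csum N (fun n => Hinner (f n) b).
Proof. induction N; simpl; [apply Hinner_zero_l | rewrite Hinner_addl, IHN; reflexivity]. Qed.

Lemma Hnorm_Hsum N (f : nat -> H) : Hnorm H (Hsum H N f) <= Rsum N (fun n => Hnorm H (f n)).
Proof.
  induction N; simpl; [rewrite Hnorm_zero; lra | eapply Rle_trans; [apply Hnorm_triangle | lra]].
Qed.

Lemma Hnorm_Hsum_sub (f : nat -> H) m n : (n <= m)%nat ->
  Hnorm H (Hsub H (Hsum H m f) (Hsum H n f))
  <= Rsum m (fun k => Hnorm H (f k)) - Rsum n (fun k => Hnorm H (f k)).
Proof.
  intro le. induction le.
  - rewrite Hsub_diag, Hnorm_zero. lra.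
  - simpl. rewrite (Hsub_chain _ (Hsum H m f)).
    replace (Hsub H (Hadd (Hsum H m f) (f m)) (Hsum H m f)) with (f m).
    + pose proof (Hnorm_triangle (f m) (Hsub H (Hsum H m f) (Hsum H n f))). lra.
    + unfold Hsub. rewrite (Hadd_comm H (Hsum H m f)), <- Hadd_assoc, Hadd_opp, Hadd_zero_r.
      reflexivity.
Qed.

Lemma Bessel_of_upper_Riesz (psi : nat -> H) (k2 : R) (b : H) :
  k2 > 0 -> (forall n, 0 < Hnorm H (psi n)) ->
  (forall N (a : nat -> CC), Hnorm H (Hsum H N (fun n => Hscal (a n) (psi n))) ^ 2
     <= k2 * Rsum N (fun n => Cabs (a n) ^ 2 * Hnorm H (psi n) ^ 2)) ->
  forall N, Rsum N (fun n => Cabs (Hinner (psi n) b) ^ 2 / Hnorm H (psi n) ^ 2) <= k2 * Hnorm H b ^ 2.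
Proof.
  intros k2p psi_pos upper N.
  set (s := fun n => Cabs (Hinner (psi n) b) ^ 2 / Hnorm H (psi n) ^ 2).
  (* test the Riesz bound on x = sum_n conj <psi n, b> / |psi n|^2 psi n, for which <x, b> = sum s *)
  set (a := fun n => (fst (Hinner (psi n) b) / Hnorm H (psi n) ^ 2,
                      - snd (Hinner (psi n) b) / Hnorm H (psi n) ^ 2) : CC).
  set (x := Hsum H N (fun n => Hscal (a n) (psi n))).
  assert (inner_x : Hinner x b = RtoC (Rsum N s)).
  { unfold x. rewrite Hinner_Hsum, <- Csum_RtoC. apply Csum_ext. intros n _.
    rewrite Hinner_scall. unfold a, s. rewrite Cabs_sq. pose proof (psi_pos n).
    destruct (Hinner (psi n) b) as [u v]. unfold Cmul, RtoC; simpl.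
    f_equal; field; lra. }
  assert (norm_x : Hnorm H x ^ 2 <= k2 * Rsum N s).
  { eapply Rle_trans; [apply upper|]. right. f_equal. apply Rsum_ext. intros n _.
    unfold a, s. rewrite !Cabs_sq. simpl. pose proof (psi_pos n). field. lra. }
  assert (s0 : 0 <= Rsum N s).
  { apply Rsum_ge0. intro n. apply Rdiv_le_0_compat; [apply pow2_ge_0 | apply pow_lt, psi_pos]. }
  pose proof (Cauchy_Schwarz x b) as cs.
  rewrite inner_x, Cabs_RtoC, Rabs_pos_eq in cs by exact s0.
  pose proof (Hnorm_ge0 x); pose proof (Hnorm_ge0 b).
  assert (Rsum N s ^ 2 <= k2 * Rsum N s * Hnorm H b ^ 2).
  { apply Rle_trans with (Hnorm H x ^ 2 * Hnorm H b ^ 2);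
      [rewrite <- Rpow_mult_distr; apply pow_incr; lra | nra]. }
  destruct (Req_dec (Rsum N s) 0) as [z | nz]; [rewrite z; nra|].
  apply (Rmult_le_reg_l (Rsum N s)); [lra | nra].
Qed.

End HilbertSpaceTheory.

(** * Derivatives of complex-valued functions and the exponential series *)

Definition CDer (f : R -> CC) (s : R) (d : CC) : Prop :=
  derivable_pt_lim (fun u => fst (f u)) s (fst d) /\
  derivable_pt_lim (fun u => snd (f u)) s (snd d).

Lemma CDer_ext f g s d d' : CDer f s d -> (forall u, f u = g u) -> d = d' -> CDer g s d'.
Proof.
  intros [h1 h2] e <-. split;
    (eapply derivable_pt_lim_ext; [intro u; rewrite <- e; reflexivity | assumption]).
Qed.

Lemma CDer_const c s : CDer (fun _ => c) s C0.
Proof. split; apply derivable_pt_lim_const. Qed.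

Lemma CDer_add f g s df dg : CDer f s df -> CDer g s dg ->
  CDer (fun u => Cadd (f u) (g u)) s (Cadd df dg).
Proof. intros [f1 f2] [g1 g2]. split; apply derivable_pt_lim_plus; assumption. Qed.

Lemma derivable_pt_lim_eq_l f s l l' : derivable_pt_lim f s l -> l = l' -> derivable_pt_lim f s l'.
Proof. intros d <-; exact d. Qed.

Lemma CDer_mul f g s df dg : CDer f s df -> CDer g s dg ->
  CDer (fun u => Cmul (f u) (g u)) s (Cadd (Cmul df (g s)) (Cmul (f s) dg)).
Proof.
  intros [f1 f2] [g1 g2].
  pose proof (derivable_pt_lim_mult _ _ _ _ _ f1 g1) as d11.
  pose proof (derivable_pt_lim_mult _ _ _ _ _ f2 g2) as d22.
  pose proof (derivable_pt_lim_mult _ _ _ _ _ f1 g2) as d12.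
  pose proof (derivable_pt_lim_mult _ _ _ _ _ f2 g1) as d21.
  split; eapply derivable_pt_lim_eq_l;
    [exact (derivable_pt_lim_minus _ _ _ _ _ d11 d22) | |
     exact (derivable_pt_lim_plus _ _ _ _ _ d12 d21) |];
    unfold mult_fct; destruct df, dg, (f s), (g s); simpl; ring.
Qed.

Lemma CDer_rscal r c s dr : derivable_pt_lim r s dr ->
  CDer (fun u => Cmul (RtoC (r u)) c) s (Cmul (RtoC dr) c).
Proof.
  intro d. destruct c as [c1 c2]. split; simpl.
  - eapply derivable_pt_lim_ext; [| eapply derivable_pt_lim_eq_l;
      [apply (derivable_pt_lim_scal r c1 s dr d) |]];
      unfold mult_real_fct; intros; ring.
  - eapply derivable_pt_lim_ext; [| eapply derivable_pt_lim_eq_l;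
      [apply (derivable_pt_lim_scal r c2 s dr d) |]];
      unfold mult_real_fct; intros; ring.
Qed.

Lemma Cmul_RtoC c s : Cmul c (RtoC s) = (fst c * s, snd c * s).
Proof. destruct c; unfold Cmul, RtoC; simpl; f_equal; ring. Qed.

Lemma CDer_exp c s : CDer (fun u => Cexp (Cmul c (RtoC u))) s (Cmul c (Cexp (Cmul c (RtoC s)))).
Proof.
  destruct c as [c1 c2].
  split; apply is_derive_Reals; rewrite !Cmul_RtoC; unfold Cexp, Cmul; simpl;
    auto_derive; auto; rewrite !Rmult_0_r, Ropp_0, Rplus_0_r, Rplus_0_l; ring.
Qed.

Lemma CDer_continuity f s d : CDer f s d ->
  continuity_pt (fun u => fst (f u)) s /\ continuity_pt (fun u => snd (f u)) s.
Proof. intros [h1 h2]. split; apply derivable_continuous_pt; eexists; eauto. Qed.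

Lemma mvt_bound F F' t B : (forall u, derivable_pt_lim F u (F' u)) ->
  (forall u, Rabs u <= Rabs t -> Rabs (F' u) <= B) -> Rabs (F t - F 0) <= B * Rabs t.
Proof.
  intros d b. destruct (Rtotal_order t 0) as [lt | [-> | gt]].
  - destruct (MVT_cor2 F F' t 0 lt (fun c _ => d c)) as [c [e hc]].
    rewrite <- Rabs_Ropp. replace (- (F t - F 0)) with (F 0 - F t) by ring.
    rewrite e, Rabs_mult, Rminus_0_l, (Rabs_left t), (Rabs_pos_eq (- t)) by lra.
    apply Rmult_le_compat_r; [lra|]. apply b. rewrite (Rabs_left t) by lra.
    apply Rabs_le; lra.
  - rewrite Rminus_diag, !Rabs_R0. lra.
  - destruct (MVT_cor2 F F' 0 t gt (fun c _ => d c)) as [c [e hc]].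
    rewrite e, Rabs_mult, Rminus_0_r, (Rabs_pos_eq t) by lra.
    apply Rmult_le_compat_r; [lra|]. apply b. rewrite (Rabs_pos_eq t) by lra.
    apply Rabs_le; lra.
Qed.

Lemma CDer_mvt_bound F F' t B : (forall u, CDer F u (F' u)) ->
  (forall u, Rabs u <= Rabs t -> Cabs (F' u) <= B) ->
  Cabs (Cadd (F t) (Copp (F 0))) <= 2 * B * Rabs t.
Proof.
  intros d b.
  pose proof (mvt_bound (fun u => fst (F u)) (fun u => fst (F' u)) t B (fun u => proj1 (d u))
    (fun u hu => Rle_trans _ _ _ (Rabs_fst_le_Cabs _) (b u hu))) as m1.
  pose proof (mvt_bound (fun u => snd (F u)) (fun u => snd (F' u)) t B (fun u => proj2 (d u))
    (fun u hu => Rle_trans _ _ _ (Rabs_snd_le_Cabs _) (b u hu))) as m2.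
  eapply Rle_trans; [apply Cabs_le_Rabs_fst_snd|]. cbv beta in m1, m2. simpl. unfold Rminus in *. lra.
Qed.

Definition Cexp_partial (w : CC) (t : R) (K : nat) : CC :=
  Csum K (fun k => Cmul (RtoC (t ^ k / INR (fact k))) (Cpow w k)).

Lemma Cexp_partial_S w t K : Cexp_partial w t (S K) =
  Cadd (Cexp_partial w t K) (Cmul (RtoC (t ^ K / INR (fact K))) (Cpow w K)).
Proof. reflexivity. Qed.

Lemma Cexp_partial_0 w K : Cexp_partial w 0 (S K) = C1.
Proof.
  induction K.
  - unfold Cexp_partial; simpl. unfold Cadd, Cmul, RtoC, C0, C1; simpl. f_equal; field.
  - rewrite Cexp_partial_S, IHK. simpl pow. unfold Rdiv. rewrite !Rmult_0_l. cring.
Qed.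

Lemma derivable_pt_lim_pow_fact k s :
  derivable_pt_lim (fun u => u ^ S k / INR (fact (S k))) s (s ^ k / INR (fact k)).
Proof.
  pose proof (INR_fact_lt_0 k). pose proof (pos_INR k).
  eapply derivable_pt_lim_ext; [| eapply derivable_pt_lim_eq_l;
    [apply (derivable_pt_lim_scal _ (/ INR (fact (S k))) s _ (derivable_pt_lim_pow s (S k))) |]].
  - intro u. unfold mult_real_fct, Rdiv. ring.
  - simpl pred. rewrite fact_simpl, mult_INR, S_INR. field. lra.
Qed.

Lemma Cexp_partial_der w K s :
  CDer (fun u => Cexp_partial w u (S K)) s (Cmul w (Cexp_partial w s K)).
Proof.
  induction K.
  - eapply CDer_ext.
    + apply (CDer_add _ _ s _ _ (CDer_const C0 s)
        (CDer_rscal (fun u => u ^ 0 / INR (fact 0)) (Cpow w 0) s 0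
          (derivable_pt_lim_const (1 / INR (fact 0)) s))).
    + reflexivity.
    + unfold Cexp_partial; simpl. cring.
  - eapply CDer_ext.
    + apply (CDer_add _ _ s _ _ IHK (CDer_rscal _ (Cpow w (S K)) s _ (derivable_pt_lim_pow_fact K s))).
    + reflexivity.
    + rewrite Cexp_partial_S. simpl Cpow. cring.
Qed.

Lemma Cexp_opp_mul w t : Cmul (Cexp (Cmul (Copp w) (RtoC t))) (Cexp (Cmul w (RtoC t))) = C1.
Proof.
  rewrite !Cmul_RtoC. destruct w as [w1 w2]. unfold Cexp, Copp, Cmul, C1; simpl.
  replace (- w1 * t) with (- (w1 * t)) by ring. replace (- w2 * t) with (- (w2 * t)) by ring.
  rewrite cos_neg, sin_neg. pose proof (sin2_cos2 (w2 * t)). unfold Rsqr in *.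
  assert (exp (- (w1 * t)) * exp (w1 * t) = 1) by (rewrite <- exp_plus, Rplus_opp_l; apply exp_0).
  f_equal; nra.
Qed.

Lemma Cexp_at_0 w : Cexp (Cmul w (RtoC 0)) = C1.
Proof. rewrite Cmul_RtoC. unfold Cexp; simpl. rewrite !Rmult_0_r, exp_0, cos_0, sin_0. cring. Qed.

(* Taylor's bound: the partial sum times exp (- w u) equals 1 at u = 0 and has a small derivative. *)
Lemma Cexp_defect_der w K u :
  CDer (fun u => Cmul (Cexp_partial w u (S K)) (Cexp (Cmul (Copp w) (RtoC u)))) u
    (Cmul (Copp w) (Cmul (Cmul (RtoC (u ^ K / INR (fact K))) (Cpow w K))
                         (Cexp (Cmul (Copp w) (RtoC u))))).
Proof.
  eapply CDer_ext;
    [apply (CDer_mul _ _ u _ _ (Cexp_partial_der w K u) (CDer_exp (Copp w) u)) | reflexivity |].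
  rewrite Cexp_partial_S. cring.
Qed.

Lemma Cabs_Cexp_defect_der_le w t K u : Rabs u <= Rabs t ->
  Cabs (Cmul (Copp w) (Cmul (Cmul (RtoC (u ^ K / INR (fact K))) (Cpow w K))
                           (Cexp (Cmul (Copp w) (RtoC u)))))
  <= Cabs w * (Rabs t ^ K / INR (fact K) * Cabs w ^ K) * exp (Cabs w * Rabs t).
Proof.
  intro hu. rewrite !Cabs_mul, Cabs_opp, Cabs_RtoC, Cabs_Cpow, Cabs_Cexp, Cmul_RtoC; simpl.
  pose proof (Cabs_ge0 w) as w0. pose proof (INR_fact_lt_0 K).
  assert (h1 : Rabs (u ^ K / INR (fact K)) <= Rabs t ^ K / INR (fact K)).
  { unfold Rdiv. rewrite Rabs_mult, Rabs_inv, <- RPow_abs, (Rabs_pos_eq (INR _)) by lra.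
    apply Rmult_le_compat_r; [left; apply Rinv_0_lt_compat; lra|].
    apply pow_incr. split; [apply Rabs_pos | exact hu]. }
  assert (h2 : exp (- fst w * u) <= exp (Cabs w * Rabs t)).
  { apply exp_le_compat. pose proof (Rabs_fst_le_Cabs w). pose proof (Rabs_pos u).
    apply Rle_trans with (Rabs (fst w) * Rabs u); [|apply Rmult_le_compat; auto; apply Rabs_pos].
    rewrite <- Rabs_mult, <- Rabs_Ropp. replace (- (fst w * u)) with (- fst w * u) by ring.
    apply Rle_abs. }
  pose proof (Rabs_pos (u ^ K / INR (fact K))). pose proof (pow_le _ K w0).
  pose proof (exp_pos (- fst w * u)).
  rewrite (Rmult_assoc (Cabs w)). apply Rmult_le_compat_l; auto.
  apply Rmult_le_compat; nra.
Qed.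

Lemma Cexp_partial_error w t K :
  Cabs (Cadd (Cexp_partial w t (S K)) (Copp (Cexp (Cmul w (RtoC t)))))
  <= 2 * (Cabs w * exp (Cabs w * Rabs t) * Rabs t * Cabs (Cexp (Cmul w (RtoC t))))
     * ((Cabs w * Rabs t) ^ K / INR (fact K)).
Proof.
  set (E := Cexp (Cmul w (RtoC t))).
  set (q := fun u => Cexp (Cmul (Copp w) (RtoC u))).
  pose proof (CDer_mvt_bound _ _ t _ (Cexp_defect_der w K) (Cabs_Cexp_defect_der_le w t K)) as mvt.
  cbv beta in mvt. rewrite Cexp_partial_0, Cexp_at_0 in mvt.
  replace (Cmul C1 C1) with C1 in mvt by cring.
  replace (Cadd (Cexp_partial w t (S K)) (Copp E))
    with (Cmul (Cadd (Cmul (Cexp_partial w t (S K)) (q t)) (Copp C1)) E).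
  - rewrite Cabs_mul.
    eapply Rle_trans; [apply Rmult_le_compat_r; [apply Cabs_ge0 | exact mvt]|].
    rewrite Rpow_mult_distr. right. unfold Rdiv. ring.
  - pose proof (Cexp_opp_mul w t) as e. fold (q t) E in e.
    transitivity (Cadd (Cmul (Cexp_partial w t (S K)) (Cmul (q t) E)) (Copp E)); [cring|].
    rewrite e. cring.
Qed.

Lemma Cexp_partial_conv w t : forall eps, eps > 0 -> exists N, forall K, (K >= N)%nat ->
  Cabs (Cadd (Cexp_partial w t K) (Copp (Cexp (Cmul w (RtoC t))))) < eps.
Proof.
  intros eps ep.
  set (C := 2 * (Cabs w * exp (Cabs w * Rabs t) * Rabs t * Cabs (Cexp (Cmul w (RtoC t))))).
  assert (C0 : 0 <= C).
  { unfold C. pose proof (Cabs_ge0 w); pose proof (exp_pos (Cabs w * Rabs t));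
    pose proof (Rabs_pos t); pose proof (Cabs_ge0 (Cexp (Cmul w (RtoC t)))).
    apply Rmult_le_pos; [lra|]. repeat apply Rmult_le_pos; lra. }
  destruct (cv_speed_pow_fact (Cabs w * Rabs t) (eps / (C + 1))) as [N hN];
    [apply Rdiv_lt_0_compat; lra|].
  exists (S N). intros [|K] hK; [lia|]. specialize (hN K ltac:(lia)).
  unfold Rdist in hN. rewrite Rminus_0_r in hN.
  eapply Rle_lt_trans; [apply Cexp_partial_error|]. fold C.
  set (x := (Cabs w * Rabs t) ^ K / INR (fact K)) in *.
  apply Rle_lt_trans with ((C + 1) * Rabs x); [pose proof (Rle_abs x); pose proof (Rabs_pos x); nra|].
  apply (Rmult_lt_compat_l (C + 1)) in hN; [|lra]. field_simplify in hN; lra.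
Qed.

(** * The exponential of a bounded operator *)

Section OperatorExponential.
Variable H : HilbertSpace.
Variable A : H -> H.
Variable M : R.
Hypothesis M_ge0 : 0 <= M.
Hypothesis A_add : forall x y, A (Hadd x y) = Hadd (A x) (A y).
Hypothesis A_scal : forall a x, A (Hscal a x) = Hscal a (A x).
Hypothesis A_bounded : forall x, Hnorm H (A x) <= M * Hnorm H x.

Lemma iter_A_add n x y : Nat.iter n A (Hadd x y) = Hadd (Nat.iter n A x) (Nat.iter n A y).
Proof. induction n; simpl; [reflexivity | rewrite IHn, A_add; reflexivity]. Qed.

Lemma iter_A_scal n a x : Nat.iter n A (Hscal a x) = Hscal a (Nat.iter n A x).
Proof. induction n; simpl; [reflexivity | rewrite IHn, A_scal; reflexivity]. Qed.

Lemma iter_A_bounded n x : Hnorm H (Nat.iter n A x) <= M ^ n * Hnorm H x.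
Proof.
  induction n; simpl; [lra|].
  eapply Rle_trans; [apply A_bounded|]. pose proof (Hnorm_ge0 H (Nat.iter n A x)). nra.
Qed.

Definition expA_term (t : R) (x : H) (k : nat) : H :=
  Hscal (RtoC (t ^ k / INR (fact k))) (Nat.iter k A x).

Definition expA_partial (t : R) (x : H) (K : nat) : H := Hsum H K (expA_term t x).

Lemma expA_term_bounded t x k :
  Hnorm H (expA_term t x k) <= Hnorm H x * ((Rabs t * M) ^ k / INR (fact k)).
Proof.
  unfold expA_term. rewrite Hnorm_scal, Cabs_RtoC. pose proof (iter_A_bounded k x).
  pose proof (INR_fact_lt_0 k).
  unfold Rdiv. rewrite Rabs_mult, Rabs_inv, <- RPow_abs, (Rabs_pos_eq (INR _)), Rpow_mult_distr by lra.
  assert (0 <= Rabs t ^ k * / INR (fact k)).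
  { apply Rmult_le_pos; [apply pow_le, Rabs_pos | left; apply Rinv_0_lt_compat; auto]. }
  replace (Hnorm H x * (Rabs t ^ k * M ^ k * / INR (fact k)))
    with (Rabs t ^ k * / INR (fact k) * (M ^ k * Hnorm H x)) by ring.
  apply Rmult_le_compat_l; auto.
Qed.

Lemma expA_partial_bounded t x K : Hnorm H (expA_partial t x K) <= exp (Rabs t * M) * Hnorm H x.
Proof.
  eapply Rle_trans; [apply Hnorm_Hsum|].
  eapply Rle_trans; [apply Rsum_le; intro; apply expA_term_bounded|].
  rewrite Rsum_scal, (Rmult_comm (exp _)). apply Rmult_le_compat_l; [apply Hnorm_ge0|].
  apply exp_series_le. pose proof (Rabs_pos t). nra.
Qed.

(* The series converges absolutely, dominated by the scalar series of exp (|t| M) |x|. *)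
Lemma expA_partial_conv t x : Hconv H (expA_partial t x) (expA H A t x).
Proof.
  set (g := fun k => Hnorm H x * ((Rabs t * M) ^ k / INR (fact k))).
  assert (g_cauchy : Cauchy_crit (fun K => Rsum K g)).
  { apply CV_Cauchy. exists (Hnorm H x * exp (Rabs t * M)).
    eapply Un_cv_ext; [intro K; unfold g; symmetry; apply Rsum_scal|].
    apply CV_mult; [|apply exp_series].
    intros e ep; exists O; intros; unfold R_dist; rewrite Rminus_diag, Rabs_R0; lra. }
  assert (cauchy : forall m n, (n <= m)%nat ->
    Hnorm H (Hsub H (expA_partial t x m) (expA_partial t x n)) <= Rabs (Rsum m g - Rsum n g)).
  { intros m n le. eapply Rle_trans; [apply Hnorm_Hsum_sub; exact le|].
    eapply Rle_trans; [apply Rsum_diff_le; [exact le | intro; apply expA_term_bounded]|].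
    apply Rle_abs. }
  destruct (Hcomplete H (expA_partial t x)) as [l hl].
  - intros eps ep. destruct (g_cauchy eps ep) as [N hN]. exists N. intros m n hm hn.
    fold (Hsub H (expA_partial t x m) (expA_partial t x n)).
    fold (Hnorm H (Hsub H (expA_partial t x m) (expA_partial t x n))).
    destruct (Nat.le_ge_cases n m) as [le | ge].
    + eapply Rle_lt_trans; [apply cauchy, le | apply hN; auto].
    + rewrite Hnorm_sub_sym. eapply Rle_lt_trans; [apply cauchy, ge | apply hN; auto].
  - unfold expA. fold (expA_term t x). fold (expA_partial t x).
    rewrite (Hlim_spec H _ l hl). exact hl.
Qed.

Lemma expA_add t x y : expA H A t (Hadd x y) = Hadd (expA H A t x) (expA H A t y).
Proof.
  apply (Hconv_unique H (expA_partial t (Hadd x y))); [apply expA_partial_conv|].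
  replace (expA_partial t (Hadd x y))
    with (fun K => Hadd (expA_partial t x K) (expA_partial t y K)).
  - apply Hconv_add; apply expA_partial_conv.
  - apply functional_extensionality. intro K. unfold expA_partial. rewrite <- Hsum_add.
    apply Hsum_ext. intros. unfold expA_term. rewrite iter_A_add, Hscal_addr. reflexivity.
Qed.

Lemma expA_scal t a x : expA H A t (Hscal a x) = Hscal a (expA H A t x).
Proof.
  apply (Hconv_unique H (expA_partial t (Hscal a x))); [apply expA_partial_conv|].
  replace (expA_partial t (Hscal a x)) with (fun K => Hscal a (expA_partial t x K)).
  - apply Hconv_scal, expA_partial_conv.
  - apply functional_extensionality. intro K. unfold expA_partial. rewrite Hsum_scal.
    apply Hsum_ext. intros. unfold expA_term. rewrite iter_A_scal, !Hscal_assoc.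
    f_equal. cring.
Qed.

Lemma expA_sub t x y : expA H A t (Hsub H x y) = Hsub H (expA H A t x) (expA H A t y).
Proof. unfold Hsub. rewrite expA_add, !Hopp_scal, expA_scal. reflexivity. Qed.

Lemma expA_zero t : expA H A t Hzero = Hzero.
Proof. rewrite <- (Hscal_C0 H Hzero), expA_scal, !Hscal_C0. reflexivity. Qed.

Lemma expA_Hsum t N f : expA H A t (Hsum H N f) = Hsum H N (fun n => expA H A t (f n)).
Proof. induction N; simpl; [apply expA_zero | rewrite expA_add, IHN; reflexivity]. Qed.

Lemma expA_bounded t x : Hnorm H (expA H A t x) <= exp (Rabs t * M) * Hnorm H x.
Proof.
  apply (Hconv_norm_le H (expA_partial t x)); [apply expA_partial_bounded | apply expA_partial_conv].
Qed.

Lemma expA_eigenvector t v w : A v = Hscal w v -> expA H A t v = Hscal (Cexp (Cmul w (RtoC t))) v.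
Proof.
  intro e.
  assert (partial : forall K, expA_partial t v K = Hscal (Cexp_partial w t K) v).
  { assert (iter : forall k, Nat.iter k A v = Hscal (Cpow w k) v).
    { induction k; simpl; [symmetry; apply Hscal_one|].
      rewrite IHk, A_scal, e, Hscal_assoc. f_equal. cring. }
    intro K. unfold expA_partial, Cexp_partial. rewrite <- Hsum_scal_vec.
    apply Hsum_ext. intros. unfold expA_term. rewrite iter, Hscal_assoc. reflexivity. }
  apply (Hconv_unique H (expA_partial t v)); [apply expA_partial_conv|].
  intros eps ep. pose proof (Hnorm_ge0 H v).
  destruct (Cexp_partial_conv w t (eps / (Hnorm H v + 1))) as [N hN];
    [apply Rdiv_lt_0_compat; lra|].
  exists N. intros n hn. rewrite partial, Hsub_scal_vec, Hnorm_scal. specialize (hN n hn).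
  pose proof (Cabs_ge0 (Cadd (Cexp_partial w t n) (Copp (Cexp (Cmul w (RtoC t)))))).
  apply (Rmult_lt_compat_l (Hnorm H v + 1)) in hN; [|lra]. field_simplify in hN; [|lra]. nra.
Qed.

End OperatorExponential.

(** * Integrals over [0, oo) *)

Lemma RiemannInt_le_const f c T (pr : Riemann_integrable f 0 T) : 0 <= T ->
  (forall t, 0 < t < T -> f t <= c) -> RiemannInt pr <= c * T.
Proof.
  intros hT b. pose proof (RiemannInt_P19 pr (RiemannInt_P14 0 T c) hT b) as le.
  rewrite RiemannInt_P15, Rminus_0_r in le. exact le.
Qed.

Lemma RiemannInt_ge_const f c T (pr : Riemann_integrable f 0 T) : 0 <= T ->
  (forall t, 0 < t < T -> c <= f t) -> c * T <= RiemannInt pr.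
Proof.
  intros hT b. pose proof (RiemannInt_P19 (RiemannInt_P14 0 T c) pr hT b) as le.
  rewrite RiemannInt_P15, Rminus_0_r in le. exact le.
Qed.

Lemma RiemannInt_le_2sum f g h T (prf : Riemann_integrable f 0 T)
  (prg : Riemann_integrable g 0 T) (prh : Riemann_integrable h 0 T) : 0 <= T ->
  (forall t, 0 < t < T -> f t <= 2 * g t + 2 * h t) ->
  RiemannInt prf <= 2 * RiemannInt prg + 2 * RiemannInt prh.
Proof.
  intros hT pw.
  pose proof (RiemannInt_P10 1 prg prh) as prgh.
  pose proof (RiemannInt_P10 1 prgh prgh) as pr2.
  pose proof (RiemannInt_P19 prf pr2 hT ltac:(intros t ht; specialize (pw t ht); lra)) as le.
  pose proof (RiemannInt_P13 prgh prgh pr2) as e1. pose proof (RiemannInt_P13 prg prh prgh) as e2.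
  cbv beta in le, e1, e2. lra.
Qed.

Lemma RiemannInt_mono_bound f T1 T2
  (pr1 : Riemann_integrable f 0 T1) (pr2 : Riemann_integrable f 0 T2) :
  0 <= T1 <= T2 -> (forall t, 0 <= f t) -> RiemannInt pr1 <= RiemannInt pr2.
Proof.
  intros h p. pose proof (RiemannInt_P23 pr2 h) as pr3.
  rewrite <- (RiemannInt_P26 pr1 pr3 pr2).
  pose proof (RiemannInt_P19 (RiemannInt_P14 T1 T2 0) pr3 (proj2 h) (fun t _ => p t)) as le.
  rewrite RiemannInt_P15 in le. lra.
Qed.

Lemma conv0inf_unique f L1 L2 : conv0inf f L1 -> conv0inf f L2 -> L1 = L2.
Proof.
  intros [i c1] [_ c2].
  assert (close : forall eps, eps > 0 -> Rabs (L1 - L2) < 2 * eps).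
  { intros eps ep. destruct (c1 eps ep) as [M1 h1], (c2 eps ep) as [M2 h2].
    set (T := Rmax 0 (Rmax M1 M2)).
    assert (T0 : 0 <= T) by apply Rmax_l.
    assert (T1 : M1 <= T) by (eapply Rle_trans; [apply Rmax_l | apply Rmax_r]).
    assert (T2 : M2 <= T) by (eapply Rle_trans; [apply Rmax_r | apply Rmax_r]).
    destruct (i T T0) as [pr]. specialize (h1 T pr T0 T1). specialize (h2 T pr T0 T2).
    replace (L1 - L2) with (- (RiemannInt pr - L1) + (RiemannInt pr - L2)) by ring.
    eapply Rle_lt_trans; [apply Rabs_triang|]. rewrite Rabs_Ropp. lra. }
  destruct (Req_dec L1 L2) as [e | ne]; [exact e|].
  pose proof (Rabs_pos_lt _ (Rminus_eq_contra _ _ ne)).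
  specialize (close (Rabs (L1 - L2) / 2) ltac:(lra)). lra.
Qed.

Lemma int0inf_eq f L : conv0inf f L -> int0inf f = L.
Proof.
  intro c. apply (conv0inf_unique f); [|exact c]. unfold int0inf. apply epsilon_spec. exists L; exact c.
Qed.

Lemma conv0inf_partial_le f L T (pr : Riemann_integrable f 0 T) :
  conv0inf f L -> (forall t, 0 <= f t) -> 0 <= T -> RiemannInt pr <= L.
Proof.
  intros [i c] p hT. apply Rnot_lt_le. intro lt.
  destruct (c (RiemannInt pr - L) ltac:(lra)) as [M0 h].
  assert (T'0 : 0 <= Rmax T M0) by (eapply Rle_trans; [exact hT | apply Rmax_l]).
  destruct (i (Rmax T M0) T'0) as [pr'].
  specialize (h _ pr' T'0 (Rmax_r _ _)).
  pose proof (RiemannInt_mono_bound f T _ pr pr' (conj hT (Rmax_l _ _)) p).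
  apply Rabs_def2 in h. lra.
Qed.

Lemma conv0inf_le_of_partial f L B : conv0inf f L ->
  (forall T (pr : Riemann_integrable f 0 T), 0 <= T -> RiemannInt pr <= B) -> L <= B.
Proof.
  intros [i c] hb. apply Rnot_lt_le. intro lt.
  destruct (c (L - B) ltac:(lra)) as [M0 h].
  destruct (i (Rmax 0 M0) (Rmax_l _ _)) as [pr].
  specialize (h _ pr (Rmax_l _ _) (Rmax_r _ _)). specialize (hb _ pr (Rmax_l _ _)).
  apply Rabs_def2 in h. lra.
Qed.

(* Monotone convergence of the partial integrals: their supremum is the limit. *)
Lemma conv0inf_of_bounded f B : (forall T, 0 <= T -> inhabited (Riemann_integrable f 0 T)) ->
  (forall t, 0 <= f t) -> (forall T (pr : Riemann_integrable f 0 T), 0 <= T -> RiemannInt pr <= B) ->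
  exists L, conv0inf f L.
Proof.
  intros i p hb.
  set (E := fun y => exists T (pr : Riemann_integrable f 0 T), 0 <= T /\ y = RiemannInt pr).
  assert (bE : bound E) by (exists B; intros y [T [pr [hT ->]]]; auto).
  assert (nE : exists y, E y).
  { destruct (i 0 (Rle_refl 0)) as [pr]. exists (RiemannInt pr), 0, pr. split; [lra | reflexivity]. }
  destruct (completeness E bE nE) as [L [ub lub]]. exists L. split; [exact i|].
  intros eps ep.
  assert (nub : ~ is_upper_bound E (L - eps)) by (intro u; specialize (lub _ u); lra).
  apply not_all_ex_not in nub as [y hy]. apply imply_to_and in hy as [[T0 [pr0 [hT0 ->]]] hy].
  exists T0. intros T pr hT hM.
  pose proof (RiemannInt_mono_bound f T0 T pr0 pr (conj hT0 hM) p).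
  assert (RiemannInt pr <= L) by (apply ub; exists T, pr; auto).
  apply Rabs_def1; lra.
Qed.

Lemma conv0inf_ge_const f c L : conv0inf f L -> (forall t, 0 <= t -> c <= f t) -> c <= 0.
Proof.
  intros [i cv] lb. apply Rnot_lt_le; intro cp.
  destruct (cv 1 ltac:(lra)) as [M0 hM].
  set (T := Rmax (Rmax 0 M0) ((Rabs L + 2) / c)).
  assert (T0 : 0 <= T) by (eapply Rle_trans; [apply Rmax_l | apply Rmax_l]).
  assert (TM : M0 <= T) by (eapply Rle_trans; [apply Rmax_r | apply Rmax_l]).
  assert (Tc : (Rabs L + 2) / c <= T) by apply Rmax_r.
  destruct (i T T0) as [pr]. specialize (hM T pr T0 TM). apply Rabs_def2 in hM.
  pose proof (RiemannInt_ge_const f c T pr T0 (fun t ht => lb t ltac:(lra))).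
  apply (Rmult_le_compat_l c) in Tc; [|lra].
  replace (c * ((Rabs L + 2) / c)) with (Rabs L + 2) in Tc by (field; lra).
  pose proof (Rle_abs L). lra.
Qed.

Lemma exp_decay_below a k : 0 < a -> 0 < k -> exists T0, forall T, T0 <= T -> exp (- a * T) < k.
Proof.
  intros ha hk. exists ((1 - ln k) / a). intros T hT.
  rewrite <- (exp_ln k hk). apply exp_increasing.
  apply (Rmult_le_compat_l a) in hT; [|lra].
  replace (a * ((1 - ln k) / a)) with (1 - ln k) in hT by (field; lra). lra.
Qed.

Lemma exp_decay_continuity c a t : continuity_pt (fun t => c * exp (- 2 * a * t)) t.
Proof.
  apply derivable_continuous_pt. exists (c * (- 2 * a) * exp (- 2 * a * t)).
  apply is_derive_Reals. auto_derive; auto. ring.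
Qed.

Lemma RiemannInt_exp_decay c a T (pr : Riemann_integrable (fun t => c * exp (- 2 * a * t)) 0 T) :
  0 < a -> RiemannInt pr = c / (2 * a) - c / (2 * a) * exp (- 2 * a * T).
Proof.
  intro ha. rewrite <- RInt_Reals.
  assert (D : forall x, Rmin 0 T <= x <= Rmax 0 T ->
    is_derive (fun t => - c / (2 * a) * exp (- 2 * a * t)) x (c * exp (- 2 * a * x))).
  { intros x _. auto_derive; auto. field. lra. }
  assert (C : forall x, Rmin 0 T <= x <= Rmax 0 T -> continuous (fun t => c * exp (- 2 * a * t)) x).
  { intros x _. apply continuity_pt_filterlim, exp_decay_continuity. }
  rewrite (is_RInt_unique _ _ _ _ (is_RInt_derive _ _ 0 T D C)).
  unfold minus, plus, opp; simpl. rewrite Rmult_0_r, exp_0. field. lra.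
Qed.

Lemma conv0inf_exp_decay c a : 0 < a -> conv0inf (fun t => c * exp (- 2 * a * t)) (c / (2 * a)).
Proof.
  intro ha. split.
  - intros T hT. constructor.
    apply continuity_implies_RiemannInt; [exact hT | intros; apply exp_decay_continuity].
  - intros eps ep. pose proof (Rabs_pos c).
    set (k := eps * (2 * a) / (Rabs c + 1)).
    destruct (exp_decay_below (2 * a) k) as [T0 hT0]; [lra | unfold k; apply Rdiv_lt_0_compat; nra |].
    exists T0. intros T pr _ hT. specialize (hT0 T hT).
    replace (- (2 * a) * T) with (- 2 * a * T) in hT0 by ring.
    rewrite RiemannInt_exp_decay by exact ha.
    replace (c / (2 * a) - c / (2 * a) * exp (- 2 * a * T) - c / (2 * a))
      with (- (c * exp (- 2 * a * T)) / (2 * a)) by (field; lra).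
    unfold Rdiv. rewrite Rabs_mult, Rabs_Ropp, Rabs_mult, (Rabs_pos_eq (exp _)),
      (Rabs_pos_eq (/ _)) by (left; apply Rinv_0_lt_compat || apply exp_pos; lra).
    apply (Rmult_lt_reg_r (2 * a)); [lra|]. rewrite Rmult_assoc, Rinv_l, Rmult_1_r by lra.
    assert (ke : k * (Rabs c + 1) = eps * (2 * a)) by (unfold k; field; lra).
    pose proof (exp_pos (- 2 * a * T)). nra.
Qed.

(** * Observability in the eigenbasis *)

Section EigenfunctionExpansion.
Variable H : HilbertSpace.
Variable A : H -> H.
Variable M : R.
Hypothesis M_ge0 : 0 <= M.
Hypothesis A_add : forall x y, A (Hadd x y) = Hadd (A x) (A y).
Hypothesis A_scal : forall a x, A (Hscal a x) = Hscal a (A x).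
Hypothesis A_bounded : forall x, Hnorm H (A x) <= M * Hnorm H x.
Variable phi : nat -> H.
Variable lambda : nat -> CC.
Hypothesis phi_nonzero : forall n, phi n <> Hzero.
Hypothesis phi_eigen : forall n, A (phi n) = Hscal (Copp (lambda n)) (phi n).
Variable b : H.

Definition En (n : nat) (t : R) : CC :=
  Cmul (Cexp (Cmul (Copp (lambda n)) (RtoC t))) (Hinner (phi n) b).

Definition output_sq (x : H) (t : R) : R := Cabs (Hinner (expA H A t x) b) ^ 2.

Definition comb (a : nat -> CC) (N : nat) : H := Hsum H N (fun n => Hscal (a n) (phi n)).

Definition obs_bounds (c1 c2 : R) (x : H) : Prop :=
  exists L, conv0inf (output_sq x) L /\ c1 * Hnorm H x ^ 2 <= L /\ L <= c2 * Hnorm H x ^ 2.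

Definition eig_ratio (n : nat) : R :=
  Cabs (Hinner b (phi n)) / (Hnorm H (phi n) * sqrt (2 * CRe (lambda n))).

Definition riesz_bounds (k1 k2 : R) : Prop :=
  forall N a, k1 * Rsum N (fun n => Cabs (a n) ^ 2 * Hnorm H (phi n) ^ 2) <= Hnorm H (comb a N) ^ 2 /\
    Hnorm H (comb a N) ^ 2 <= k2 * Rsum N (fun n => Cabs (a n) ^ 2 * Hnorm H (phi n) ^ 2).

Definition eig_ratio_bounded : Prop :=
  exists c1 c2, 0 < c1 /\ c1 <= c2 /\ forall n, c1 <= eig_ratio n /\ eig_ratio n <= c2.

Lemma inner_expA_phi n t : Hinner (expA H A t (phi n)) b = En n t.
Proof. erewrite expA_eigenvector by eauto. rewrite Hinner_scall. reflexivity. Qed.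

Lemma inner_expA_comb a N t :
  Hinner (expA H A t (comb a N)) b = Csum N (fun n => Cmul (a n) (En n t)).
Proof.
  unfold comb. erewrite expA_Hsum by eauto. rewrite Hinner_Hsum.
  apply Csum_ext. intros n _.
  erewrite expA_scal by eauto. rewrite Hinner_scall, inner_expA_phi. reflexivity.
Qed.

Lemma inner_expA_sub x y t : Hinner (expA H A t (Hsub H x y)) b =
  Cadd (Hinner (expA H A t x) b) (Copp (Hinner (expA H A t y) b)).
Proof. erewrite expA_sub by eauto. apply Hinner_sub_l. Qed.

Lemma Cabs_inner_expA_le x t :
  Cabs (Hinner (expA H A t x) b) <= exp (Rabs t * M) * Hnorm H x * Hnorm H b.
Proof.
  eapply Rle_trans; [apply Cauchy_Schwarz|].
  apply Rmult_le_compat_r; [apply Hnorm_ge0 | eapply expA_bounded; eauto].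
Qed.

Lemma Cabs_En_sq n :
  (fun t => Cabs (En n t) ^ 2) = fun t => Cabs (Hinner (phi n) b) ^ 2 * exp (- 2 * CRe (lambda n) * t).
Proof.
  apply functional_extensionality. intro t. unfold En.
  rewrite Cabs_mul, Cabs_Cexp, Cmul_RtoC. unfold CRe. destruct (lambda n) as [l1 l2]; simpl.
  replace (- 2 * l1 * t) with (- l1 * t + - l1 * t) by ring. rewrite exp_plus. ring.
Qed.

Lemma output_sq_phi n :
  output_sq (phi n) = fun t => Cabs (Hinner (phi n) b) ^ 2 * exp (- 2 * CRe (lambda n) * t).
Proof.
  rewrite <- Cabs_En_sq. apply functional_extensionality. intro t.
  unfold output_sq. rewrite inner_expA_phi. reflexivity.
Qed.

Lemma output_sq_comb a N :
  output_sq (comb a N) = fun t => Cabs (Csum N (fun n => Cmul (a n) (En n t))) ^ 2.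
Proof.
  apply functional_extensionality. intro t. unfold output_sq. rewrite inner_expA_comb. reflexivity.
Qed.

Lemma output_sq_ge0 x t : 0 <= output_sq x t.
Proof. apply pow2_ge_0. Qed.

Lemma L2norm2_En n : CRe (lambda n) > 0 ->
  L2norm2 (En n) = Cabs (Hinner (phi n) b) ^ 2 / (2 * CRe (lambda n)).
Proof. intro p. unfold L2norm2. rewrite Cabs_En_sq. apply int0inf_eq, conv0inf_exp_decay. lra. Qed.

Lemma phi_norm_pos n : 0 < Hnorm H (phi n).
Proof.
  destruct (Hnorm_ge0 H (phi n)) as [p | e]; [exact p|].
  destruct (phi_nonzero n). apply Hnorm_zero_inv. auto.
Qed.

Lemma eig_ratio_sq n : CRe (lambda n) > 0 ->
  eig_ratio n ^ 2 * Hnorm H (phi n) ^ 2 = Cabs (Hinner (phi n) b) ^ 2 / (2 * CRe (lambda n)).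
Proof.
  intro p. pose proof (phi_norm_pos n). pose proof (sqrt_lt_R0 (2 * CRe (lambda n)) ltac:(lra)).
  unfold eig_ratio. rewrite Hinner_conj, Cabs_conj.
  unfold Rdiv. rewrite !Rpow_mult_distr, pow_inv, Rpow_mult_distr, pow2_sqrt by lra.
  field. lra.
Qed.

Lemma eig_ratio_ge0 n : CRe (lambda n) > 0 -> 0 <= eig_ratio n.
Proof.
  intro p. apply Rdiv_le_0_compat; [apply Cabs_ge0|].
  apply Rmult_lt_0_compat; [apply phi_norm_pos | apply sqrt_lt_R0; lra].
Qed.

Section Observable.
Variables o1 o2 : R.
Hypothesis o1_pos : o1 > 0.
Hypothesis observable : forall x, obs_bounds o1 o2 x.

Lemma observable_Re_lambda_pos n : CRe (lambda n) > 0.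
Proof.
  destruct (observable (phi n)) as [L [cv [lo _]]]. rewrite output_sq_phi in cv.
  pose proof (phi_norm_pos n).
  assert (Lp : 0 < L).
  { eapply Rlt_le_trans; [|exact lo]. apply Rmult_lt_0_compat; [lra | apply pow_lt; lra]. }
  pose proof (pow2_ge_0 (Cabs (Hinner (phi n) b))). set (c := Cabs (Hinner (phi n) b) ^ 2) in *.
  apply Rnot_le_lt. intro ha.
  (* a nonpositive decay rate leaves an integrand bounded below by the constant c *)
  assert (c0 : c <= 0).
  { apply (conv0inf_ge_const _ c L cv). intros t ht.
    rewrite <- (Rmult_1_r c) at 1. apply Rmult_le_compat_l; [lra|].
    rewrite <- exp_0. apply exp_le_compat. nra. }
  assert (L <= 0).
  { apply (conv0inf_le_of_partial _ _ 0 cv). intros T pr hT.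
    rewrite <- (Rmult_0_l T). apply RiemannInt_le_const; [exact hT|].
    intros t _. replace c with 0 by lra. lra. }
  lra.
Qed.

Lemma observable_L2norm2_En n :
  o1 * Hnorm H (phi n) ^ 2 <= L2norm2 (En n) <= o2 * Hnorm H (phi n) ^ 2.
Proof.
  pose proof (observable_Re_lambda_pos n) as p.
  destruct (observable (phi n)) as [L [cv bounds]]. rewrite output_sq_phi in cv.
  rewrite L2norm2_En, (conv0inf_unique _ _ _ (conv0inf_exp_decay _ _ p) cv); auto.
Qed.

Lemma observable_o1_le_o2 : o1 <= o2.
Proof.
  destruct (observable_L2norm2_En 0). pose proof (phi_norm_pos 0).
  apply (Rmult_le_reg_r (Hnorm H (phi 0) ^ 2)); [apply pow_lt|]; lra.
Qed.

Lemma observable_eig_ratio n : sqrt o1 <= eig_ratio n <= sqrt o2.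
Proof.
  pose proof (observable_Re_lambda_pos n) as p.
  pose proof (observable_L2norm2_En n) as bnd. rewrite L2norm2_En, <- eig_ratio_sq in bnd by exact p.
  pose proof (pow_lt _ 2 (phi_norm_pos n)).
  rewrite <- (sqrt_pow2 (eig_ratio n)) by (apply eig_ratio_ge0, p).
  split; apply sqrt_le_1_alt; apply (Rmult_le_reg_r (Hnorm H (phi n) ^ 2)); lra.
Qed.

Lemma observable_Re_lambda_cv0 k2 : k2 > 0 ->
  (forall N a, Hnorm H (comb a N) ^ 2 <= k2 * Rsum N (fun n => Cabs (a n) ^ 2 * Hnorm H (phi n) ^ 2)) ->
  Un_cv (fun n => CRe (lambda n)) 0.
Proof.
  intros k2p upper.
  set (s := fun n => Cabs (Hinner (phi n) b) ^ 2 / Hnorm H (phi n) ^ 2).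
  assert (s_cv : Un_cv s 0).
  { apply (terms_cv0_of_bounded_sums s (k2 * Hnorm H b ^ 2)).
    - intro n. apply Rdiv_le_0_compat; [apply pow2_ge_0 | apply pow_lt, phi_norm_pos].
    - apply Bessel_of_upper_Riesz; [exact k2p | exact phi_norm_pos | exact upper]. }
  (* the lower observability bound at phi n *)
  assert (dominated : forall n, 0 < CRe (lambda n) <= s n / (2 * o1)).
  { intro n. pose proof (observable_Re_lambda_pos n). pose proof (phi_norm_pos n).
    pose proof (proj1 (observable_L2norm2_En n)) as lo. rewrite L2norm2_En in lo by lra.
    split; [lra|]. unfold s.
    assert (pos : 0 < 2 * o1 * Hnorm H (phi n) ^ 2)
      by (apply Rmult_lt_0_compat; [lra | apply pow_lt; lra]).
    apply (Rmult_le_reg_r _ _ _ pos).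
    replace (Cabs (Hinner (phi n) b) ^ 2 / Hnorm H (phi n) ^ 2 / (2 * o1)
             * (2 * o1 * Hnorm H (phi n) ^ 2))
      with (Cabs (Hinner (phi n) b) ^ 2) by (field; lra).
    apply (Rmult_le_compat_l (2 * CRe (lambda n))) in lo; [|lra].
    replace (2 * CRe (lambda n) * (Cabs (Hinner (phi n) b) ^ 2 / (2 * CRe (lambda n))))
      with (Cabs (Hinner (phi n) b) ^ 2) in lo by (field; lra).
    lra. }
  intros eps ep. destruct (s_cv (2 * o1 * eps)) as [N hN]; [nra|].
  exists N. intros n hn. specialize (hN n hn). specialize (dominated n).
  unfold R_dist in *. rewrite Rminus_0_r in *.
  assert (s n / (2 * o1) < eps).
  { apply (Rmult_lt_reg_r (2 * o1)); [lra|].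
    replace (s n / (2 * o1) * (2 * o1)) with (s n) by (field; lra).
    pose proof (Rle_abs (s n)). lra. }
  rewrite Rabs_pos_eq; lra.
Qed.

Lemma observable_unconditional_L2 k1 k2 : k1 > 0 -> k2 > 0 ->
  riesz_bounds k1 k2 ->
  unconditional_sequence_L2 En.
Proof.
  intros k1p k2p riesz. pose proof observable_o1_le_o2. split.
  { intro n. eexists. rewrite Cabs_En_sq. apply conv0inf_exp_decay.
    pose proof (observable_Re_lambda_pos n); lra. }
  exists (o1 * k1 / o2), (o2 * k2 / o1).
  split; [apply Rdiv_lt_0_compat; nra|]. split; [apply Rdiv_lt_0_compat; nra|].
  intros N a. destruct (observable (comb a N)) as [L [cv [lo hi]]].
  rewrite output_sq_comb in cv. exists L. split; [exact cv|]. destruct (riesz N a) as [r1 r2].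
  pose proof (Rsum_sq_weights_between a _ _ o1 o2 N observable_L2norm2_En) as QP.
  set (P := Rsum N (fun n => Cabs (a n) ^ 2 * Hnorm H (phi n) ^ 2)) in *.
  set (Q := Rsum N (fun n => Cabs (a n) ^ 2 * L2norm2 (En n))) in *.
  split.
  - apply Rle_trans with (o1 * k1 / o2 * (o2 * P)).
    + apply Rmult_le_compat_l; [apply Rdiv_le_0_compat; nra | lra].
    + replace (o1 * k1 / o2 * (o2 * P)) with (o1 * (k1 * P)) by (field; lra).
      eapply Rle_trans; [|exact lo]. apply Rmult_le_compat_l; lra.
  - apply Rle_trans with (o2 * (k2 * P)).
    + eapply Rle_trans; [exact hi|]. apply Rmult_le_compat_l; lra.
    + replace (o2 * (k2 * P)) with (o2 * k2 / o1 * (o1 * P)) by (field; lra).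
      apply Rmult_le_compat_l; [apply Rdiv_le_0_compat; nra | lra].
Qed.

Lemma observable_conditions k1 k2 : k1 > 0 -> k2 > 0 -> riesz_bounds k1 k2 ->
  (forall n, CRe (lambda n) > 0) /\ Un_cv (fun n => CRe (lambda n)) 0 /\
  unconditional_sequence_L2 En /\ eig_ratio_bounded.
Proof.
  intros k1p k2p riesz. split; [exact observable_Re_lambda_pos|]. split.
  - apply (observable_Re_lambda_cv0 k2 k2p). intros N a. apply riesz.
  - split; [exact (observable_unconditional_L2 k1 k2 k1p k2p riesz)|].
    exists (sqrt o1), (sqrt o2). split; [apply sqrt_lt_R0; lra|].
    split; [apply sqrt_le_1_alt, observable_o1_le_o2 | exact observable_eig_ratio].
Qed.

End Observable.

Section Density.
Hypothesis phi_complete : complete_sequence H phi.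

Lemma comb_En_CDer a N t : exists d, CDer (fun u => Csum N (fun n => Cmul (a n) (En n u))) t d.
Proof.
  induction N as [|N [d hd]]; [exists C0; exact (CDer_const C0 t)|].
  pose proof (CDer_mul _ (fun _ => Hinner (phi N) b) t _ C0
    (CDer_exp (Copp (lambda N)) t) (CDer_const _ t)) as dE.
  pose proof (CDer_mul (fun _ => a N) (fun u => En N u) t C0 _ (CDer_const (a N) t) dE) as dterm.
  eexists. exact (CDer_add _ _ t _ _ hd dterm).
Qed.

Lemma inner_expA_component_continuity (p : CC -> R) x t :
  (forall z w, Rabs (p z - p w) <= Cabs (Cadd z (Copp w))) ->
  (forall a N, continuity_pt (fun u => p (Csum N (fun n => Cmul (a n) (En n u)))) t) ->
  continuity_pt (fun u => p (Hinner (expA H A u x) b)) t.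
Proof.
  intros p_lip comb_cont. apply continuity_pt_uniform_approx. intros eps ep.
  set (K := exp ((Rabs t + 1) * M) * Hnorm H b + 1).
  assert (Kp : 0 < K)
    by (pose proof (exp_pos ((Rabs t + 1) * M)); pose proof (Hnorm_ge0 H b); unfold K; nra).
  destruct (phi_complete x (eps / K)) as [N [a close]]; [apply Rdiv_lt_0_compat; lra|].
  fold (comb a N) in close.
  exists (fun u => p (Hinner (expA H A u (comb a N)) b)). split.
  - eapply continuity_pt_ext; [intro u; rewrite inner_expA_comb; reflexivity | apply comb_cont].
  - intros u hu. eapply Rle_lt_trans; [apply p_lip|]. rewrite <- inner_expA_sub.
    eapply Rle_lt_trans; [apply Cabs_inner_expA_le|].
    assert (eu : exp (Rabs u * M) <= exp ((Rabs t + 1) * M)).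
    { apply exp_le_compat, Rmult_le_compat_r; [exact M_ge0|].
      pose proof (Rabs_triang_inv u t). lra. }
    pose proof (Hnorm_ge0 H b). pose proof (Hnorm_ge0 H (Hsub H x (comb a N))).
    apply Rle_lt_trans with (K * Hnorm H (Hsub H x (comb a N))).
    + replace (exp (Rabs u * M) * Hnorm H (Hsub H x (comb a N)) * Hnorm H b)
        with (exp (Rabs u * M) * Hnorm H b * Hnorm H (Hsub H x (comb a N))) by ring.
      apply Rmult_le_compat_r; [assumption|]. unfold K.
      pose proof (Rmult_le_compat_r (Hnorm H b) _ _ ltac:(assumption) eu). lra.
    + apply (Rmult_lt_compat_l K) in close; [|exact Kp].
      replace (K * (eps / K)) with eps in close by (field; lra). exact close.
Qed.

Lemma output_sq_continuity x t : continuity_pt (output_sq x) t.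
Proof.
  assert (cfst : continuity_pt (fun u => fst (Hinner (expA H A u x) b)) t).
  { apply inner_expA_component_continuity; [intros z w; exact (Rabs_fst_le_Cabs (Cadd z (Copp w)))|].
    intros a N. destruct (comb_En_CDer a N t) as [d hd]. exact (proj1 (CDer_continuity _ _ _ hd)). }
  assert (csnd : continuity_pt (fun u => snd (Hinner (expA H A u x) b)) t).
  { apply inner_expA_component_continuity; [intros z w; exact (Rabs_snd_le_Cabs (Cadd z (Copp w)))|].
    intros a N. destruct (comb_En_CDer a N t) as [d hd]. exact (proj2 (CDer_continuity _ _ _ hd)). }
  apply (continuity_pt_ext
    ((fun u => fst (Hinner (expA H A u x) b)) * (fun u => fst (Hinner (expA H A u x) b)) +
     (fun u => snd (Hinner (expA H A u x) b)) * (fun u => snd (Hinner (expA H A u x) b)))%F).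
  - intro u. unfold output_sq, plus_fct, mult_fct. rewrite Cabs_sq. ring.
  - apply continuity_pt_plus; apply continuity_pt_mult; assumption.
Qed.

Lemma output_sq_integrable x T : 0 <= T -> Riemann_integrable (output_sq x) 0 T.
Proof.
  intro hT. apply continuity_implies_RiemannInt; [exact hT | intros; apply output_sq_continuity].
Qed.

Variables C1 C2 : R.
Hypothesis C1_pos : C1 > 0.
Hypothesis C2_pos : C2 > 0.
Hypothesis obs_comb : forall a N, obs_bounds C1 C2 (comb a N).

Lemma output_sq_partial_upper x T (pr : Riemann_integrable (output_sq x) 0 T) :
  0 <= T -> RiemannInt pr <= 2 * C2 * Hnorm H x ^ 2.
Proof.
  intro hT. set (Kb := exp (T * M) * Hnorm H b).
  assert (Kb0 : 0 <= Kb) by (pose proof (exp_pos (T * M)); pose proof (Hnorm_ge0 H b); unfold Kb; nra).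
  apply (le_of_approx _ _ (2 * C2 * (2 * Hnorm H x + 1) + 2 * T * Kb ^ 2));
    [pose proof (Hnorm_ge0 H x); pose proof (pow2_ge_0 Kb); nra|].
  intros d [dp d1]. destruct (phi_complete x d dp) as [N [a close]]. fold (comb a N) in close.
  set (y := comb a N) in *.
  destruct (obs_comb a N) as [Ly [cvy [_ hiy]]]. fold y in cvy, hiy.
  destruct (proj1 cvy T hT) as [pry].
  (* |g_x|^2 <= 2 |g_y|^2 + 2 |g_(x - y)|^2, and g_(x - y) is uniformly small on [0, T] *)
  assert (split_int : RiemannInt pr
    <= 2 * RiemannInt pry + 2 * RiemannInt (RiemannInt_P14 0 T ((Kb * d) ^ 2))).
  { apply RiemannInt_le_2sum; [exact hT|]. intros u hu. unfold output_sq, fct_cte.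
    pose proof (Cabs_sq_le_sub (Hinner (expA H A u x) b) (Hinner (expA H A u y) b)) as sq.
    rewrite <- inner_expA_sub in sq.
    enough (small : Cabs (Hinner (expA H A u (Hsub H x y)) b) <= Kb * d).
    { pose proof (pow_incr _ _ 2 (conj (Cabs_ge0 _) small)). lra. }
    eapply Rle_trans; [apply Cabs_inner_expA_le|].
    pose proof (Hnorm_ge0 H (Hsub H x y)). pose proof (Hnorm_ge0 H b).
    assert (exp (Rabs u * M) <= exp (T * M)).
    { apply exp_le_compat, Rmult_le_compat_r; [exact M_ge0 | rewrite Rabs_pos_eq; lra]. }
    apply Rle_trans with (exp (T * M) * Hnorm H (Hsub H x y) * Hnorm H b).
    - apply Rmult_le_compat_r; [assumption|]. apply Rmult_le_compat_r; assumption.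
    - unfold Kb. replace (exp (T * M) * Hnorm H b * d) with (exp (T * M) * d * Hnorm H b) by ring.
      apply Rmult_le_compat_r; [assumption|]. apply Rmult_le_compat_l; [left; apply exp_pos | lra]. }
  rewrite RiemannInt_P15 in split_int.
  pose proof (conv0inf_partial_le _ _ T pry cvy (output_sq_ge0 y) hT).
  pose proof (Hnorm_sq_close H x y d ltac:(lra) d1) as ny. apply Rabs_le_between in ny.
  assert (const : (Kb * d) ^ 2 * (T - 0) <= T * Kb ^ 2 * d).
  { rewrite Rminus_0_r. pose proof (pow2_ge_0 Kb).
    replace ((Kb * d) ^ 2 * T) with (T * Kb ^ 2 * d * d) by ring.
    rewrite <- (Rmult_1_r (T * Kb ^ 2 * d)) at 2. apply Rmult_le_compat_l; [|lra].
    apply Rmult_le_pos; [apply Rmult_le_pos|]; lra. }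
  assert (C2 * Hnorm H y ^ 2 <= C2 * (Hnorm H x ^ 2 + d * (2 * Hnorm H x + 1)))
    by (apply Rmult_le_compat_l; lra).
  lra.
Qed.

Lemma output_sq_lower x L : conv0inf (output_sq x) L -> C1 * Hnorm H x ^ 2 <= 2 * L.
Proof.
  intro cvx. pose proof (Hnorm_ge0 H x).
  apply (le_of_approx _ _ (C1 * (2 * Hnorm H x + 1) + 4 * C2)); [nra|].
  intros d [dp d1]. destruct (phi_complete x d dp) as [N [a close]]. fold (comb a N) in close.
  set (y := comb a N) in *. destruct (obs_comb a N) as [Ly [cvy [loy _]]]. fold y in cvy, loy.
  set (z := Hsub H y x).
  assert (nz : Hnorm H z <= d) by (unfold z; rewrite Hnorm_sub_sym; lra).
  (* |g_y|^2 <= 2 |g_x|^2 + 2 |g_(y - x)|^2, and the upper bound already holds for y - x *)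
  assert (Ly_le : Ly <= 2 * L + 4 * C2 * d ^ 2).
  { apply (conv0inf_le_of_partial _ _ _ cvy). intros T pry hT.
    pose proof (output_sq_integrable x T hT) as prx. pose proof (output_sq_integrable z T hT) as prz.
    assert (RiemannInt pry <= 2 * RiemannInt prx + 2 * RiemannInt prz).
    { apply RiemannInt_le_2sum; [exact hT|]. intros u _. unfold output_sq.
      pose proof (Cabs_sq_le_sub (Hinner (expA H A u y) b) (Hinner (expA H A u x) b)) as sq.
      rewrite <- inner_expA_sub in sq. exact sq. }
    pose proof (conv0inf_partial_le _ _ T prx cvx (output_sq_ge0 x) hT).
    pose proof (output_sq_partial_upper z T prz hT).
    assert (C2 * Hnorm H z ^ 2 <= C2 * d ^ 2).
    { apply Rmult_le_compat_l; [lra|]. apply pow_incr. split; [apply Hnorm_ge0 | exact nz]. }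
    lra. }
  pose proof (Hnorm_sq_close H x y d ltac:(lra) d1) as ny. apply Rabs_le_between in ny.
  assert (C1 * Hnorm H x ^ 2 <= C1 * (Hnorm H y ^ 2 + d * (2 * Hnorm H x + 1)))
    by (apply Rmult_le_compat_l; lra).
  assert (d ^ 2 <= d) by nra.
  nra.
Qed.

Lemma observable_of_comb_bounds : exists c1 c2, c1 > 0 /\ c2 > 0 /\ forall x, obs_bounds c1 c2 x.
Proof.
  exists (C1 / 2), (2 * C2). split; [lra|]. split; [lra|]. intro x.
  destruct (conv0inf_of_bounded (output_sq x) (2 * C2 * Hnorm H x ^ 2)) as [L cv].
  - intros T hT. constructor. apply output_sq_integrable, hT.
  - apply output_sq_ge0.
  - intros T pr hT. apply output_sq_partial_upper, hT.
  - exists L. split; [exact cv|]. split.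
    + pose proof (output_sq_lower x L cv). lra.
    + apply (conv0inf_le_of_partial _ _ _ cv). intros T pr hT. apply output_sq_partial_upper, hT.
Qed.

End Density.

Lemma L2norm2_En_bounds_of_eig_ratio n d1 d2 : CRe (lambda n) > 0 -> 0 <= d1 ->
  d1 <= eig_ratio n <= d2 ->
  d1 ^ 2 * Hnorm H (phi n) ^ 2 <= L2norm2 (En n) <= d2 ^ 2 * Hnorm H (phi n) ^ 2.
Proof.
  intros p d0 [r1 r2]. rewrite L2norm2_En, <- eig_ratio_sq by exact p.
  pose proof (pow2_ge_0 (Hnorm H (phi n))).
  split; apply Rmult_le_compat_r; auto; apply pow_incr; lra.
Qed.

Lemma comb_obs_bounds k1 k2 : k1 > 0 -> k2 > 0 -> riesz_bounds k1 k2 ->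
  (forall n, CRe (lambda n) > 0) -> unconditional_sequence_L2 En -> eig_ratio_bounded ->
  exists C1 C2, C1 > 0 /\ C2 > 0 /\ forall a N, obs_bounds C1 C2 (comb a N).
Proof.
  intros k1p k2p riesz pos [_ [e1 [e2 [e1p [e2p L2]]]]] [d1 [d2 [d1p [_ ratio]]]].
  assert (d2p : 0 < d2) by (destruct (ratio O); lra).
  exists (e1 * d1 ^ 2 / k2), (e2 * d2 ^ 2 / k1).
  split; [|split];
    [apply Rdiv_lt_0_compat; [apply Rmult_lt_0_compat; [lra | apply pow_lt; lra] | lra] ..|].
  intros a N.
  destruct (L2 N a) as [L [cv [lo hi]]]. exists L. rewrite output_sq_comb. split; [exact cv|].
  destruct (riesz N a) as [r1 r2].
  pose proof (Rsum_sq_weights_between a _ _ (d1 ^ 2) (d2 ^ 2) N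
    (fun n => L2norm2_En_bounds_of_eig_ratio n d1 d2 (pos n) ltac:(lra) (ratio n))) as [q1 q2].
  set (P := Rsum N (fun n => Cabs (a n) ^ 2 * Hnorm H (phi n) ^ 2)) in *.
  set (Q := Rsum N (fun n => Cabs (a n) ^ 2 * L2norm2 (En n))) in *.
  set (y2 := Hnorm H (comb a N) ^ 2) in *.
  pose proof (pow2_ge_0 d1); pose proof (pow2_ge_0 d2).
  split.
  - apply Rle_trans with (e1 * (d1 ^ 2 * P));
      [|apply Rle_trans with (e1 * Q); [apply Rmult_le_compat_l|]; lra].
    replace (e1 * d1 ^ 2 / k2 * y2) with (e1 * (d1 ^ 2 * (y2 / k2))) by (field; lra).
    apply Rmult_le_compat_l; [lra|]. apply Rmult_le_compat_l; [lra|].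
    apply (Rmult_le_reg_r k2); [lra|]. replace (y2 / k2 * k2) with y2 by (field; lra). lra.
  - apply Rle_trans with (e2 * (d2 ^ 2 * P));
      [apply Rle_trans with (e2 * Q); [|apply Rmult_le_compat_l]; lra|].
    replace (e2 * d2 ^ 2 / k1 * y2) with (e2 * (d2 ^ 2 * (y2 / k1))) by (field; lra).
    apply Rmult_le_compat_l; [lra|]. apply Rmult_le_compat_l; [lra|].
    apply (Rmult_le_reg_r k1); [lra|]. replace (y2 / k1 * k1) with y2 by (field; lra). lra.
Qed.
Lemma observable_of_conditions k1 k2 : complete_sequence H phi -> k1 > 0 -> k2 > 0 ->
  riesz_bounds k1 k2 -> (forall n, CRe (lambda n) > 0) -> unconditional_sequence_L2 En ->
  eig_ratio_bounded -> exists c1 c2, c1 > 0 /\ c2 > 0 /\ forall x, obs_bounds c1 c2 x.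
Proof.
  intros complete k1p k2p riesz pos L2 ratio.
  destruct (comb_obs_bounds k1 k2 k1p k2p riesz pos L2 ratio) as [C1 [C2 [C1p [C2p obs]]]].
  exact (observable_of_comb_bounds complete C1 C2 C1p C2p obs).
Qed.

End EigenfunctionExpansion.

Theorem theorem3p15
  (H : HilbertSpace) (Hsep : separable H) (Hinf : infinite_dimensional H)
  (A : H -> H) (HA : bounded_operator H A)
  (phi : nat -> H) (lambda : nat -> CC)
  (Hphi_nz : forall n, phi n <> Hzero)
  (Hbasis : unconditional_basis H phi)
  (Heig : forall n, A (phi n) = Hscal (Copp (lambda n)) (phi n))
  (b : H) :
  exactly_observable H A b <->
  ((forall n, CRe (lambda n) > 0) /\
   Un_cv (fun n => CRe (lambda n)) 0 /\
   unconditional_sequence_L2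
     (fun n t => Cmul (Cexp (Cmul (Copp (lambda n)) (RtoC t))) (Hinner (phi n) b)) /\
   (exists c1 c2, 0 < c1 /\ c1 <= c2 /\
      forall n,
        c1 <= Cabs (Hinner b (phi n)) / (Hnorm H (phi n) * sqrt (2 * CRe (lambda n))) /\
        Cabs (Hinner b (phi n)) / (Hnorm H (phi n) * sqrt (2 * CRe (lambda n))) <= c2)).
Proof.
  destruct HA as [A_add [A_scal [M0 bound]]].
  set (M := Rmax M0 0). assert (M_ge0 : 0 <= M) by apply Rmax_r.
  assert (A_bounded : forall x, Hnorm H (A x) <= M * Hnorm H x).
  { intro x. eapply Rle_trans; [apply bound|].
    apply Rmult_le_compat_r; [apply Hnorm_ge0 | apply Rmax_l]. }
  destruct Hbasis as [[k1 [k2 [k1p [k2p riesz]]]] complete].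
  split.
  - intros [o1 [o2 [o1p [o2p obs]]]].
    exact (observable_conditions H A M M_ge0 A_add A_scal A_bounded phi lambda Hphi_nz Heig b
             o1 o2 o1p obs k1 k2 k1p k2p riesz).
  - intros [pos [_ [L2 ratio]]].
    exact (observable_of_conditions H A M M_ge0 A_add A_scal A_bounded phi lambda Hphi_nz Heig b
             k1 k2 complete k1p k2p riesz pos L2 ratio).
Qed.
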